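(* Let $n\in\mathbb{Z}$. Let $t\in[0,1]\mapsto\gamma_t\in\mathcal{I}_n$ be a path and let $\tilde h:[0,1]^2\to\mathcal{I}_n$ be continuous with $\tilde h(0,t)=\gamma_t$ for all $t$. Assume that (i) the map $(t,s)\mapsto\gamma_t(s)$ is $C^1$ on $[0,1]\times S^1$; (ii) for all $t$, $\tilde h(1,t)$ is an embedding; (iii) for all $z$, $\tilde h(z,0)$ and $\tilde h(z,1)$ are embeddings. Then there exists a map $h:[0,1]^2\to\mathcal{I}_n$ such that: for all $t$, $h(0,t)=\gamma_t$; for every $z$, the map $h_z:(t,s)\mapsto h(z,t)(s)$ is $C^1$ on $[0,1]\times S^1$; the map $z\mapsto h_z$ is continuous from $[0,1]$ to the Banach space $C^1([0,1]\times S^1,\mathbb{R}^2)$; for all $t$, $h(1,t)$ is an embedding; and for all $z$, $h(z,0)$ and $h(z,1)$ are embeddings.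
   Context: $S^1=\mathbb{R}/\mathbb{Z}$ with base point $0$. $\mathcal{I}_n$ is the set of $C^1$ immersions $\gamma:S^1\to\mathbb{R}^2$ whose tangent vector has winding number $n$ and such that $\gamma'(0)$ is a positive multiple of $(1,0)$; it is topologized as a subset of the Banach space $C^1(S^1,\mathbb{R}^2)$ with norm $\max(\sup\|f\|,\sup\|f'\|)$. *)

From Stdlib Require Import Reals.
Open Scope R_scope.

Definition vec := (R * R)%type.
Definition vnorm (v : vec) : R := sqrt (fst v * fst v + snd v * snd v).
Definition vadd (u v : vec) : vec := (fst u + fst v, snd u + snd v).
Definition vsub (u v : vec) : vec := (fst u - fst v, snd u - snd v).
Definition vscal (a : R) (v : vec) : vec := (a * fst v, a * snd v).

Definition I01 (x : R) : Prop := 0 <= x <= 1.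

(* A map S^1 = R/Z -> R^2 is represented as a 1-periodic map R -> R^2. *)
Definition curve := (R -> vec)%type.
Definition periodic1 (g : curve) : Prop := forall s, g (s + 1) = g s.

Definition curve_deriv (g g' : curve) : Prop :=
  forall s, derivable_pt_lim (fun x => fst (g x)) s (fst (g' s)) /\
            derivable_pt_lim (fun x => snd (g x)) s (snd (g' s)).

Definition vcont (g : curve) : Prop :=
  forall s, continuity_pt (fun x => fst (g x)) s /\
            continuity_pt (fun x => snd (g x)) s.

Definition C1_curve_with (g g' : curve) : Prop :=
  periodic1 g /\ curve_deriv g g' /\ vcont g'.

(* Winding number of the (nowhere vanishing, 1-periodic) tangent g' is n:
   a continuous angle lift theta of g' satisfies theta 1 - theta 0 = 2 pi n. *)
Definition tangent_winding (g' : curve) (n : Z) : Prop :=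
  exists theta : R -> R,
    continuity theta /\
    (forall s, g' s = (vnorm (g' s) * cos (theta s), vnorm (g' s) * sin (theta s))) /\
    theta 1 - theta 0 = 2 * PI * IZR n.

Definition in_I (n : Z) (g : curve) : Prop :=
  exists g' : curve,
    C1_curve_with g g' /\
    (forall s, g' s <> (0, 0)) /\
    tangent_winding g' n /\
    snd (g' 0) = 0 /\ 0 < fst (g' 0).

(* Embedding of S^1: injective on a fundamental domain [0,1). *)
Definition is_embedding (g : curve) : Prop :=
  forall s s', 0 <= s < 1 -> 0 <= s' < 1 -> g s = g s' -> s = s'.

(* C^1-distance between g1 and g2 is at most eps
   (max(sup |g1-g2|, sup |g1'-g2'|) <= eps); derivatives are unique. *)
Definition C1_close (g1 g2 : curve) (eps : R) : Prop :=
  exists g1' g2' : curve,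
    curve_deriv g1 g1' /\ curve_deriv g2 g2' /\
    forall s, vnorm (vsub (g1 s) (g2 s)) <= eps /\
              vnorm (vsub (g1' s) (g2' s)) <= eps.

Definition path_in_I (n : Z) (gam : R -> curve) : Prop :=
  (forall t, I01 t -> in_I n (gam t)) /\
  forall t0, I01 t0 -> forall eps, 0 < eps -> exists delta, 0 < delta /\
    forall t, I01 t -> Rabs (t - t0) < delta -> C1_close (gam t) (gam t0) eps.

Definition square_map_in_I (n : Z) (H : R -> R -> curve) : Prop :=
  (forall z t, I01 z -> I01 t -> in_I n (H z t)) /\
  forall z0 t0, I01 z0 -> I01 t0 -> forall eps, 0 < eps -> exists delta, 0 < delta /\
    forall z t, I01 z -> I01 t -> Rabs (z - z0) < delta -> Rabs (t - t0) < delta ->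
      C1_close (H z t) (H z0 t0) eps.

Definition C1_cyl_with (H Dt Ds : R -> curve) : Prop :=
  (forall t s, I01 t -> H t (s + 1) = H t s) /\
  (forall t s, I01 t -> forall eps, 0 < eps -> exists delta, 0 < delta /\
     forall t' s', I01 t' -> Rabs (t' - t) < delta -> Rabs (s' - s) < delta ->
       vnorm (vsub (vsub (H t' s') (H t s))
                   (vadd (vscal (t' - t) (Dt t s)) (vscal (s' - s) (Ds t s))))
         <= eps * (Rabs (t' - t) + Rabs (s' - s))) /\
  (forall t s, I01 t -> forall eps, 0 < eps -> exists delta, 0 < delta /\
     forall t' s', I01 t' -> Rabs (t' - t) < delta -> Rabs (s' - s) < delta ->
       vnorm (vsub (Dt t' s') (Dt t s)) <= eps /\
       vnorm (vsub (Ds t' s') (Ds t s)) <= eps).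

Definition C1_cyl (H : R -> curve) : Prop :=
  exists Dt Ds : R -> curve, C1_cyl_with H Dt Ds.

From Stdlib Require Import Reals Lra Lia ClassicalEpsilon FunctionalExtensionality Classical List ZArith.
From Coquelicot Require Compactness.
Open Scope R_scope.

(* Sample [ht] on the grid [(i/N, j/N)] and interpolate with the C^1 partition of unity
   [w_j x = cos^2 (pi/2 (N x - j))] (for [|N x - j| <= 1]): row [i > 0] is
   [R_i t = sum_j w_j t * ht (i/N) (j/N)], row [0] is [gam], and [h z t = sum_i w_i z * R_i t].
   The weights are C^1 in [t] and Lipschitz in [z], which gives the regularity of [h], and
   [h 0 = gam] because [w_i 0] vanishes for [i > 0]. Each [h z t] is a convex combination of
   curves [ht z' t'] with [|z' - z|, |t' - t| < 1/N], and convex combinations of curves that are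
   C^1-close to a fixed curve stay C^1-close to it. Lying in [I_n] and being an embedding are
   C^1-open conditions, so a Lebesgue number of the compact square provides a suitable [N]. *)

Lemma vnorm_ge0 v : 0 <= vnorm v.
Proof. apply sqrt_pos. Qed.

Lemma vnorm_sq v : vnorm v * vnorm v = fst v * fst v + snd v * snd v.
Proof. apply sqrt_sqrt; nra. Qed.

Lemma vnorm_le_Rabs_sum v : vnorm v <= Rabs (fst v) + Rabs (snd v).
Proof.
  pose proof (Rabs_pos (fst v)); pose proof (Rabs_pos (snd v)).
  apply Rsqr_incr_0_var; [|lra]. unfold Rsqr. rewrite vnorm_sq.
  pose proof (Rsqr_abs (fst v)); pose proof (Rsqr_abs (snd v)). unfold Rsqr in *. nra.
Qed.

Lemma dot_le_vnorm u v : fst u * fst v + snd u * snd v <= vnorm u * vnorm v.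
Proof.
  pose proof (vnorm_sq u); pose proof (vnorm_sq v); pose proof (vnorm_ge0 u); pose proof (vnorm_ge0 v).
  destruct (Rle_dec (fst u * fst v + snd u * snd v) 0); [nra|].
  apply Rsqr_incr_0_var; [|nra]. unfold Rsqr.
  replace (vnorm u * vnorm v * (vnorm u * vnorm v)) with ((vnorm u * vnorm u) * (vnorm v * vnorm v)) by ring.
  rewrite H, H0. pose proof (pow2_ge_0 (fst u * snd v - snd u * fst v)). nra.
Qed.

Lemma vnorm_triangle u v : vnorm (vadd u v) <= vnorm u + vnorm v.
Proof.
  pose proof (vnorm_ge0 u); pose proof (vnorm_ge0 v).
  apply Rsqr_incr_0_var; [|lra]. unfold Rsqr. rewrite vnorm_sq. unfold vadd; simpl.
  pose proof (vnorm_sq u); pose proof (vnorm_sq v); pose proof (dot_le_vnorm u v). nra.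
Qed.

Lemma vnorm_scal a v : vnorm (vscal a v) = Rabs a * vnorm v.
Proof.
  unfold vnorm, vscal; simpl.
  replace (a * fst v * (a * fst v) + a * snd v * (a * snd v))
    with (Rsqr (Rabs a) * (fst v * fst v + snd v * snd v)) by (rewrite <- Rsqr_abs; unfold Rsqr; ring).
  rewrite sqrt_mult by (try apply Rle_0_sqr; nra). rewrite sqrt_Rsqr by apply Rabs_pos. reflexivity.
Qed.

Lemma Rabs_m1 : Rabs (-1) = 1.
Proof. rewrite Rabs_left; lra. Qed.

Ltac veq := apply injective_projections; simpl; ring.

Lemma dot_ge_opp_vnorm u w : - (vnorm u * vnorm w) <= fst u * fst w + snd u * snd w.
Proof.
  pose proof (dot_le_vnorm u (vscal (-1) w)). rewrite vnorm_scal, Rabs_m1 in H. simpl in H. lra.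
Qed.

Lemma vnorm_sub_sym u v : vnorm (vsub u v) = vnorm (vsub v u).
Proof. replace (vsub u v) with (vscal (-1) (vsub v u)) by veq. rewrite vnorm_scal, Rabs_m1. ring. Qed.

Lemma vnorm_sub_tri u v w : vnorm (vsub u w) <= vnorm (vsub u v) + vnorm (vsub v w).
Proof. replace (vsub u w) with (vadd (vsub u v) (vsub v w)) by veq. apply vnorm_triangle. Qed.

Lemma vnorm_sub_le u v : vnorm (vsub u v) <= vnorm u + vnorm v.
Proof.
  replace (vsub u v) with (vadd u (vscal (-1) v)) by veq.
  rewrite <- (Rmult_1_l (vnorm v)), <- Rabs_m1, <- vnorm_scal. apply vnorm_triangle.
Qed.

Lemma vnorm_le_add_sub u v : vnorm u <= vnorm v + vnorm (vsub u v).
Proof. replace u with (vadd v (vsub u v)) at 1 by veq. apply vnorm_triangle. Qed.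

Lemma vnorm_eq0 v : vnorm v = 0 -> v = (0,0).
Proof.
  intros H. pose proof (vnorm_sq v). rewrite H in H0.
  destruct v as [x y]; simpl in *. f_equal; nra.
Qed.

Lemma vnorm_gt0 v : v <> (0,0) -> 0 < vnorm v.
Proof.
  intros H. destruct (vnorm_ge0 v); auto. exfalso; apply H, vnorm_eq0; auto.
Qed.

Lemma vnorm_le_eps_eq0 v : (forall e, 0 < e -> vnorm v <= e) -> v = (0,0).
Proof.
  intros H. apply vnorm_eq0. pose proof (vnorm_ge0 v).
  destruct H0; auto. specialize (H (vnorm v / 2)). lra.
Qed.

Definition vsum (N : nat) (v : nat -> vec) : vec :=
  (sum_f_R0 (fun j => fst (v j)) N, sum_f_R0 (fun j => snd (v j)) N).

Lemma vsum_S N v : vsum (S N) v = vadd (vsum N v) (v (S N)).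
Proof. reflexivity. Qed.

Lemma vsum_0 v : vsum 0 v = v 0%nat.
Proof. unfold vsum; simpl. destruct (v 0%nat); auto. Qed.

Lemma eq_vsum N v w : (forall j, (j <= N)%nat -> v j = w j) -> vsum N v = vsum N w.
Proof.
  induction N; intros H. rewrite !vsum_0; apply H; lia.
  rewrite !vsum_S, IHN by (intros; apply H; lia). rewrite (H (S N)) by lia. auto.
Qed.

Lemma vnorm_vsum_le N v : vnorm (vsum N v) <= sum_f_R0 (fun j => vnorm (v j)) N.
Proof.
  induction N. rewrite vsum_0; simpl; lra.
  rewrite vsum_S; simpl. eapply Rle_trans. apply vnorm_triangle. lra.
Qed.

Lemma vsum_scal_const N w x : vsum N (fun j => vscal (w j) x) = vscal (sum_f_R0 w N) x.
Proof. induction N. rewrite vsum_0; auto. rewrite vsum_S, IHN. veq. Qed.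

Lemma vsub_vsum N v w : vsub (vsum N v) (vsum N w) = vsum N (fun j => vsub (v j) (w j)).
Proof. induction N. rewrite !vsum_0; auto. rewrite !vsum_S, <- IHN. veq. Qed.

Lemma vnorm_vsum_scal_le N (c : nat -> R) (v : nat -> vec) B M :
  (forall j, (j <= N)%nat -> Rabs (c j) <= B) -> (forall j, (j <= N)%nat -> vnorm (v j) <= M) ->
  vnorm (vsum N (fun j => vscal (c j) (v j))) <= INR (S N) * (B * M).
Proof.
  intros Hc Hv. eapply Rle_trans. apply vnorm_vsum_le. rewrite Rmult_comm, <- sum_cte.
  apply sum_Rle. intros j Hj. rewrite vnorm_scal.
  apply Rmult_le_compat; auto using Rabs_pos, vnorm_ge0.
Qed.

Lemma vnorm_convex_comb_sub_le N (w : nat -> R) (v : nat -> vec) x e :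
  (forall j, (j <= N)%nat -> 0 <= w j) -> sum_f_R0 w N = 1 ->
  (forall j, (j <= N)%nat -> 0 < w j -> vnorm (vsub (v j) x) <= e) ->
  vnorm (vsub (vsum N (fun j => vscal (w j) (v j))) x) <= e.
Proof.
  intros Hw Hs Hv.
  replace x with (vsum N (fun j => vscal (w j) x)) at 1
    by (rewrite vsum_scal_const, Hs; destruct x; unfold vscal; simpl; f_equal; ring).
  rewrite vsub_vsum. eapply Rle_trans. apply vnorm_vsum_le.
  apply Rle_trans with (sum_f_R0 (fun j => w j * e) N).
  - apply sum_Rle. intros j Hj.
    replace (vsub (vscal (w j) (v j)) (vscal (w j) x)) with (vscal (w j) (vsub (v j) x)) by veq.
    rewrite vnorm_scal, Rabs_right by (apply Rle_ge, Hw; auto).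
    destruct (Hw j Hj) as [Hpos | Hz].
    + apply Rmult_le_compat_l; [lra | auto].
    + rewrite <- Hz; lra.
  - rewrite <- scal_sum, Hs; lra.
Qed.

Lemma vnorm_vsum_wdiff_le N (w1 w2 : nat -> R) (v : nat -> vec) M :
  (forall i, (i <= N)%nat -> vnorm (v i) <= M) ->
  vnorm (vsub (vsum N (fun i => vscal (w1 i) (v i))) (vsum N (fun i => vscal (w2 i) (v i)))) <=
  sum_f_R0 (fun i => Rabs (w1 i - w2 i)) N * M.
Proof.
  intros HM. rewrite vsub_vsum. eapply Rle_trans. apply vnorm_vsum_le.
  rewrite Rmult_comm, scal_sum. apply sum_Rle. intros i Hi.
  replace (vsub (vscal (w1 i) (v i)) (vscal (w2 i) (v i))) with (vscal (w1 i - w2 i) (v i)) by veq.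
  rewrite vnorm_scal. apply Rmult_le_compat_l; auto using Rabs_pos.
Qed.

Lemma vsum_delta0 N (w : nat -> R) (v : nat -> vec) : w 0%nat = 1 -> (forall i, (0 < i)%nat -> w i = 0) ->
  vsum N (fun i => vscal (w i) (v i)) = v 0%nat.
Proof.
  intros H0 H1. induction N.
  - rewrite vsum_0, H0. destruct (v 0%nat); unfold vscal; simpl; f_equal; ring.
  - rewrite vsum_S, IHN, H1 by lia. destruct (v 0%nat); unfold vscal, vadd; simpl; f_equal; ring.
Qed.

Lemma curve_deriv_vsum N (c c' : nat -> curve) :
  (forall j, (j <= N)%nat -> curve_deriv (c j) (c' j)) ->
  curve_deriv (fun s => vsum N (fun j => c j s)) (fun s => vsum N (fun j => c' j s)).
Proof.
  induction N; intros H s.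
  - apply H; lia.
  - destruct (IHN (fun j Hj => H j (le_S _ _ Hj)) s) as [H1 H2].
    destruct (H (S N) (le_n _) s) as [H3 H4]. simpl in *. split.
    + apply (derivable_pt_lim_plus (fun x => sum_f_R0 (fun j => fst (c j x)) N) (fun x => fst (c (S N) x))); auto.
    + apply (derivable_pt_lim_plus (fun x => sum_f_R0 (fun j => snd (c j x)) N) (fun x => snd (c (S N) x))); auto.
Qed.

Lemma curve_deriv_scal a c c' : curve_deriv c c' -> curve_deriv (fun s => vscal a (c s)) (fun s => vscal a (c' s)).
Proof.
  intros H s. destruct (H s). simpl. split.
  - apply (derivable_pt_lim_scal (fun x => fst (c x))); auto.
  - apply (derivable_pt_lim_scal (fun x => snd (c x))); auto.
Qed.

Lemma vcont_vsum N (c : nat -> curve) :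
  (forall j, (j <= N)%nat -> vcont (c j)) -> vcont (fun s => vsum N (fun j => c j s)).
Proof.
  induction N; intros H s.
  - apply H; lia.
  - destruct (IHN (fun j Hj => H j (le_S _ _ Hj)) s) as [H1 H2].
    destruct (H (S N) (le_n _) s) as [H3 H4]. simpl in *. split.
    + apply (continuity_pt_plus (fun x => sum_f_R0 (fun j => fst (c j x)) N) (fun x => fst (c (S N) x))); auto.
    + apply (continuity_pt_plus (fun x => sum_f_R0 (fun j => snd (c j x)) N) (fun x => snd (c (S N) x))); auto.
Qed.

Lemma vcont_scal a c : vcont c -> vcont (fun s => vscal a (c s)).
Proof.
  intros H s. destruct (H s). simpl. split.
  - apply (continuity_pt_scal (fun x => fst (c x))); auto.
  - apply (continuity_pt_scal (fun x => snd (c x))); auto.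
Qed.

Lemma curve_deriv_vcont g g' : curve_deriv g g' -> vcont g.
Proof.
  intros H s. destruct (H s) as [H1 H2]. split; apply derivable_continuous_pt; eexists; eauto.
Qed.

Definition curve_comb (N : nat) (w : nat -> R) (c : nat -> curve) : curve :=
  fun s => vsum N (fun j => vscal (w j) (c j s)).

Lemma C1_curve_comb N w c c' : (forall j, (j <= N)%nat -> C1_curve_with (c j) (c' j)) ->
  C1_curve_with (curve_comb N w c) (curve_comb N w c').
Proof.
  intros H. unfold curve_comb. split; [|split].
  - intros s. apply eq_vsum. intros j Hj. destruct (H j Hj) as [P _]. rewrite P; auto.
  - apply (curve_deriv_vsum N (fun j s => vscal (w j) (c j s))).
    intros j Hj. apply curve_deriv_scal, H; auto.
  - apply (vcont_vsum N (fun j s => vscal (w j) (c' j s))).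
    intros j Hj. apply vcont_scal, H; auto.
Qed.

(* Junk value where [g] is not differentiable. *)
Definition dcurve (g : curve) : curve := fun s =>
 (epsilon (inhabits 0) (fun l => derivable_pt_lim (fun x => fst (g x)) s l),
  epsilon (inhabits 0) (fun l => derivable_pt_lim (fun x => snd (g x)) s l)).

Lemma dcurve_eq g g' : curve_deriv g g' -> dcurve g = g'.
Proof.
  intros H. apply functional_extensionality; intros s. destruct (H s) as [H1 H2].
  unfold dcurve. apply injective_projections; simpl.
  - apply (uniqueness_limite (fun x => fst (g x)) s); auto. apply epsilon_spec. eauto.
  - apply (uniqueness_limite (fun x => snd (g x)) s); auto. apply epsilon_spec. eauto.
Qed.

Lemma C1_curve_dcurve f f' : C1_curve_with f f' -> C1_curve_with f (dcurve f).
Proof. intros H. rewrite (dcurve_eq f f'); auto. apply H. Qed.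

Lemma in_I_dcurve n g : in_I n g ->
  C1_curve_with g (dcurve g) /\ (forall s, dcurve g s <> (0,0)) /\ tangent_winding (dcurve g) n /\
  snd (dcurve g 0) = 0 /\ 0 < fst (dcurve g 0).
Proof. intros [g' [HC Hg']]. rewrite (dcurve_eq g g') by apply HC. auto. Qed.

Section Periodicity.
Variable A : Type.
Variable F : R -> A.
Hypothesis F_periodic : forall s, F (s + 1) = F s.

Lemma periodic_INR k s : F (s + INR k) = F s.
Proof.
  induction k. simpl; rewrite Rplus_0_r; auto.
  rewrite S_INR, <- Rplus_assoc, F_periodic; auto.
Qed.

Lemma periodic_IZR k s : F (s + IZR k) = F s.
Proof.
  destruct (Z.le_gt_cases 0 k).
  - rewrite <- (Z2Nat.id k) by auto. rewrite <- INR_IZR_INZ. apply periodic_INR.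
  - replace k with (- Z.of_nat (Z.to_nat (- k)))%Z by lia.
    rewrite opp_IZR, <- INR_IZR_INZ, <- (periodic_INR (Z.to_nat (-k)) (s + - INR (Z.to_nat (- k)))).
    f_equal; ring.
Qed.

Lemma periodic_reduce s : exists a, 0 <= a < 1 /\ F s = F a /\ exists k, s = a + IZR k.
Proof.
  exists (s - IZR (Int_part s)). pose proof (base_Int_part s). split; [lra|]. split.
  - rewrite <- (periodic_IZR (Int_part s) (s - IZR (Int_part s))). f_equal; ring.
  - exists (Int_part s); ring.
Qed.
End Periodicity.

Lemma curve_deriv_periodic g g' : periodic1 g -> curve_deriv g g' -> periodic1 g'.
Proof.
  intros P H s. destruct (H (s + 1)) as [H1 H2]. destruct (H s) as [H3 H4].
  assert (Shift : forall (f : R -> R) l, derivable_pt_lim f (s + 1) l ->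
            (forall x, f (x + 1) = f x) -> derivable_pt_lim f s l).
  { intros f l Hf Pf e He. destruct (Hf e He) as [d Hd]. exists d. intros h Hh0 Hh.
    rewrite <- (Pf (s + h)), <- (Pf s). replace (s + h + 1) with (s + 1 + h) by ring. apply Hd; auto. }
  apply injective_projections.
  - apply (uniqueness_limite (fun x => fst (g x)) s); auto. apply Shift; auto. intros x; rewrite P; auto.
  - apply (uniqueness_limite (fun x => snd (g x)) s); auto. apply Shift; auto. intros x; rewrite P; auto.
Qed.

(** * Compactness of rectangles *)

Definition box (a b a' b' x y : R) : Prop := a <= x <= b /\ a' <= y <= b'.

Section RectangleCover.
Variables a b a' b' : R.
Variable P : R -> R -> R -> Prop.
Hypothesis P_local : forall u v, box a b a' b' u v -> exists r, 0 < r /\ P u v r.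

Let radius u v : R :=
  let r := epsilon (inhabits 1) (fun r => 0 < r /\ P u v r) in
  if Rlt_dec 0 r then r else 1.

Let radius_pos u v : 0 < radius u v.
Proof. unfold radius. destruct Rlt_dec; lra. Qed.

Let radius_spec u v : box a b a' b' u v -> P u v (radius u v).
Proof.
  intros Hb. assert (H : 0 < epsilon (inhabits 1) (fun r => 0 < r /\ P u v r) /\
                         P u v (epsilon (inhabits 1) (fun r => 0 < r /\ P u v r)))
    by (apply epsilon_spec, P_local, Hb).
  unfold radius. destruct Rlt_dec; [tauto | lra].
Qed.

Lemma box_finite_cover : exists l : list (R * R * R),
  forall x y, box a b a' b' x y -> exists u v r, In (u, v, r) l /\ P u v r /\
    Rabs (x - u) < r /\ Rabs (y - v) < r.
Proof.
  pose (delta (p : Compactness.Tn 2 R) :=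
          match p with (u, (v, _)) => mkposreal (radius u v) (radius_pos u v) end).
  pose proof (Compactness.compactness_list 2 (a, (a', tt)) (b, (b', tt)) delta) as H.
  apply NNPP in H. destruct H as [l Hl].
  exists (map (fun p : Compactness.Tn 2 R => match p with (u, (v, _)) => (u, v, radius u v) end) l).
  intros x y [Hx Hy]. destruct (Hl (x, (y, tt))) as [[u [v []]] [Hin [Hbd Hcl]]]; [simpl; tauto|].
  simpl in Hbd, Hcl. exists u, v, (radius u v). split; [|split].
  - apply in_map_iff. exists (u, (v, tt)); auto.
  - apply radius_spec. unfold box; tauto.
  - tauto.
Qed.

Lemma box_lebesgue_number : exists rho, 0 < rho /\ forall x y, box a b a' b' x y ->
  exists u v r, P u v r /\ Rabs (x - u) < r / 2 /\ Rabs (y - v) < r / 2 /\ rho <= r / 2.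
Proof.
  destruct (Compactness.compactness_value_2d a b a' b'
              (fun u v => mkposreal (radius u v / 2) ltac:(pose proof (radius_pos u v); lra))) as [d Hd].
  exists d. split; [apply cond_pos|]. intros x y [Hx Hy].
  assert (H := Hd x y Hx Hy). apply NNPP in H.
  destruct H as [u [v [Hu [Hv [H1 [H2 H3]]]]]]. simpl in *.
  exists u, v, (radius u v). split; auto. apply radius_spec. split; auto.
Qed.
End RectangleCover.

Lemma list_uniform_bound {A} (l : list A) (B : A -> R -> Prop) :
  (forall p M M', M <= M' -> B p M -> B p M') ->
  exists M, forall p, In p l -> (exists M', B p M') -> B p M.
Proof.
  intros Mono. induction l as [|p l [M IH]].
  - exists 0. intros ? [].
  - destruct (classic (exists M', B p M')) as [[M' HM'] | Hn].
    + exists (Rmax M M'). intros q [<- | Hin] Hq.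
      * eapply Mono; [apply Rmax_r | eauto].
      * eapply Mono; [apply Rmax_l | eauto].
    + exists M. intros q [<- | Hin] Hq; [contradiction | auto].
Qed.

Lemma box_uniform_bound a b a' b' (Q : R -> R -> R -> Prop) :
  (forall x y M M', M <= M' -> Q x y M -> Q x y M') ->
  (forall u v, box a b a' b' u v -> exists r, 0 < r /\ exists M,
     forall x y, box a b a' b' x y -> Rabs (x - u) < r -> Rabs (y - v) < r -> Q x y M) ->
  exists M, forall x y, box a b a' b' x y -> Q x y M.
Proof.
  intros Mono Hloc.
  destruct (box_finite_cover a b a' b' _ Hloc) as [l Hl].
  destruct (list_uniform_bound l (fun p M => forall x y, box a b a' b' x y ->
              Rabs (x - fst (fst p)) < snd p -> Rabs (y - snd (fst p)) < snd p -> Q x y M))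
    as [M HM].
  { intros p M M' HMM' Hp x y Hb Hx Hy. eapply Mono; eauto. }
  exists M. intros x y Hb. destruct (Hl x y Hb) as [u [v [r [Hin [HP [Hx Hy]]]]]].
  exact (HM (u, v, r) Hin HP x y Hb Hx Hy).
Qed.

Lemma box_pos_lower_bound a b a' b' (f : R -> R -> R) :
  (forall u v, box a b a' b' u v -> exists r, 0 < r /\ exists c, 0 < c /\
     forall x y, box a b a' b' x y -> Rabs (x - u) < r -> Rabs (y - v) < r -> c <= f x y) ->
  exists c, 0 < c /\ forall x y, box a b a' b' x y -> c <= f x y.
Proof.
  intros Hloc.
  destruct (box_uniform_bound a b a' b' (fun x y M => / Rmax M 1 <= f x y)) as [M HM].
  - intros x y M M' HMM' H. eapply Rle_trans; [|exact H].
    apply Rinv_le_contravar; [pose proof (Rmax_r M 1); lra | apply Rle_max_compat_r; auto].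
  - intros u v Hb. destruct (Hloc u v Hb) as [r [Hr [c [Hc Hf]]]].
    exists r. split; auto. exists (/ c). intros x y Hbx Hx Hy.
    eapply Rle_trans; [|apply (Hf x y Hbx Hx Hy)].
    rewrite <- (Rinv_inv c) at 2. apply Rinv_le_contravar; [apply Rinv_0_lt_compat; auto | apply Rmax_l].
  - exists (/ Rmax M 1). split; auto. apply Rinv_0_lt_compat. pose proof (Rmax_r M 1); lra.
Qed.

Lemma continuity_pt_eps f x : continuity_pt f x -> forall e, 0 < e -> exists d, 0 < d /\
  forall y, Rabs (y - x) < d -> Rabs (f y - f x) < e.
Proof.
  intros H e He. destruct (H e He) as [d [Hd Hy]]. exists d. split; auto.
  intros y Hyx. destruct (Req_dec y x) as [-> | Hne].
  - rewrite Rminus_diag, Rabs_R0; auto.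
  - apply Hy. repeat split; auto.
Qed.

Lemma vcont_eps g x : vcont g -> forall e, 0 < e -> exists d, 0 < d /\
  forall y, Rabs (y - x) < d -> vnorm (vsub (g y) (g x)) <= e.
Proof.
  intros H e He. destruct (H x) as [H1 H2].
  destruct (continuity_pt_eps _ _ H1 (e/2)) as [d1 [Hd1 D1]]; [lra|].
  destruct (continuity_pt_eps _ _ H2 (e/2)) as [d2 [Hd2 D2]]; [lra|].
  exists (Rmin d1 d2). split; [apply Rmin_pos; auto|].
  intros y Hy. pose proof (Rmin_l d1 d2); pose proof (Rmin_r d1 d2).
  eapply Rle_trans; [apply vnorm_le_Rabs_sum|]. simpl.
  specialize (D1 y ltac:(lra)). specialize (D2 y ltac:(lra)). lra.
Qed.

Section PeriodicCurve.
Variable g : curve.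
Hypothesis g_periodic : periodic1 g.
Hypothesis g_cont : vcont g.

Lemma periodic_curve_bounded : exists M, forall s, vnorm (g s) <= M.
Proof.
  destruct (box_uniform_bound 0 1 0 0 (fun x _ M => vnorm (g x) <= M)) as [M HM].
  - intros; lra.
  - intros u v _. destruct (vcont_eps g u g_cont 1) as [d [Hd D]]; [lra|].
    exists d; split; auto. exists (vnorm (g u) + 1). intros x y _ Hx _.
    specialize (D x Hx). pose proof (vnorm_le_add_sub (g x) (g u)). lra.
  - exists M. intros s. destruct (periodic_reduce _ g g_periodic s) as [a [Ha [-> _]]].
    apply (HM a 0). split; lra.
Qed.

Lemma periodic_curve_lower_bound : (forall s, g s <> (0,0)) ->
  exists m, 0 < m /\ forall s, m <= vnorm (g s).
Proof.
  intros Nz.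
  destruct (box_pos_lower_bound 0 1 0 0 (fun x _ => vnorm (g x))) as [m [Hm HM]].
  - intros u v _. pose proof (vnorm_gt0 _ (Nz u)).
    destruct (vcont_eps g u g_cont (vnorm (g u) / 2)) as [d [Hd D]]; [lra|].
    exists d; split; auto. exists (vnorm (g u) / 2). split; [lra|]. intros x y _ Hx _.
    specialize (D x Hx). rewrite vnorm_sub_sym in D. pose proof (vnorm_le_add_sub (g u) (g x)). lra.
  - exists m. split; auto. intros s. destruct (periodic_reduce _ g g_periodic s) as [a [Ha [-> _]]].
    apply (HM a 0). split; lra.
Qed.

Lemma periodic_curve_unif_cont e : 0 < e -> exists eta, 0 < eta /\
  forall s s', Rabs (s - s') < eta -> vnorm (vsub (g s) (g s')) <= e.
Proof.
  intros He.
  destruct (box_lebesgue_number 0 1 0 0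
              (fun u _ r => forall x, Rabs (x - u) < r -> vnorm (vsub (g x) (g u)) <= e / 2))
    as [rho [Hrho Hl]].
  { intros u v _. apply vcont_eps; auto. lra. }
  exists rho. split; auto. intros s s' Hss.
  destruct (periodic_reduce _ g g_periodic s) as [a [Ha [Es [k ->]]]].
  assert (Es' : g s' = g (s' - IZR k)) by (rewrite <- (periodic_IZR _ g g_periodic k (s' - IZR k)); f_equal; ring).
  rewrite Es, Es'.
  destruct (Hl a 0) as [u [v [r [HP [Hx [_ Hrr]]]]]]; [split; lra|].
  assert (Hs' : Rabs (s' - IZR k - u) < r).
  { replace (s' - IZR k - u) with (- (a + IZR k - s') + (a - u)) by ring.
    eapply Rle_lt_trans; [apply Rabs_triang|]. rewrite Rabs_Ropp. lra. }
  pose proof (HP a ltac:(lra)). pose proof (HP _ Hs').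
  pose proof (vnorm_sub_tri (g a) (g u) (g (s' - IZR k))).
  rewrite (vnorm_sub_sym (g u)) in H1. lra.
Qed.
End PeriodicCurve.

(* The normalisation [snd (f' 0) = 0] of [I_n] does not follow from closeness,
   but it survives convex combinations, so it is built into the neighbourhoods. *)
Definition C1_near (g : curve) (e : R) (f : curve) : Prop :=
  C1_curve_with f (dcurve f) /\ snd (dcurve f 0) = 0 /\
  forall s, vnorm (vsub (f s) (g s)) <= e /\ vnorm (vsub (dcurve f s) (dcurve g s)) <= e.

Definition C1_open_at (P : curve -> Prop) (g : curve) : Prop :=
  exists e, 0 < e /\ forall f, C1_near g e f -> P f.

Lemma C1_near_of_close n f g e : in_I n f -> in_I n g -> C1_close f g e -> C1_near g e f.
Proof.
  intros Hf Hg [f' [g' [Df [Dg B]]]].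
  destruct (in_I_dcurve n f Hf) as [Cf [_ [_ [Hf0 _]]]].
  unfold C1_near. rewrite (dcurve_eq g g' Dg). split; [|split]; auto.
  rewrite (dcurve_eq f f' Df). auto.
Qed.

Lemma C1_near_comb N w c g e :
  (forall j, (j <= N)%nat -> 0 <= w j) -> sum_f_R0 w N = 1 ->
  (forall j, (j <= N)%nat -> C1_curve_with (c j) (dcurve (c j))) ->
  (forall j, (j <= N)%nat -> 0 < w j -> C1_near g e (c j)) ->
  C1_near g e (curve_comb N w c).
Proof.
  intros Hw Hs HC Hnear.
  pose proof (C1_curve_comb N w c (fun j => dcurve (c j)) HC) as HC1.
  unfold C1_near. rewrite (dcurve_eq (curve_comb N w c) _ (proj1 (proj2 HC1))). split; [|split]; auto.
  - change (sum_f_R0 (fun j => w j * snd (dcurve (c j) 0)) N = 0). rewrite (sum_eq _ (fun _ => 0)), sum_cte; [ring|].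
    intros j Hj. destruct (Hw j Hj) as [Hpos | <-]; [|ring].
    destruct (Hnear j Hj Hpos) as [_ [-> _]]. ring.
  - intros s; split; apply vnorm_convex_comb_sub_le; auto; intros j Hj Hp; apply (Hnear j Hj Hp).
Qed.

Lemma C1_near_bound g e f s : C1_near g e f ->
  vnorm (f s) <= vnorm (g s) + e /\ vnorm (dcurve f s) <= vnorm (dcurve g s) + e.
Proof.
  intros [_ [_ H]]. destruct (H s).
  pose proof (vnorm_le_add_sub (f s) (g s)). pose proof (vnorm_le_add_sub (dcurve f s) (dcurve g s)).
  split; lra.
Qed.

(** * Being in [I_n] is a [C^1]-open condition *)

Lemma polar_form_atan (r rho c sn f1 f2 dt cr : R) :
  0 < r -> c * c + sn * sn = 1 -> rho * rho = f1 * f1 + f2 * f2 -> 0 <= rho ->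
  dt = r * c * f1 + r * sn * f2 -> cr = r * c * f2 - r * sn * f1 -> 0 < dt ->
  f1 = rho * cos (atan (cr / dt)) * c - rho * sin (atan (cr / dt)) * sn /\
  f2 = rho * cos (atan (cr / dt)) * sn + rho * sin (atan (cr / dt)) * c.
Proof.
  intros Hr Hcs Hrho Hrho0 Edt Ecr Hdt.
  assert (Hrho' : 0 < rho).
  { destruct Hrho0 as [|<-]; auto. assert (f1 = 0 /\ f2 = 0) as [-> ->] by (split; nra). lra. }
  assert (Hid : dt * dt + cr * cr = (r * rho) * (r * rho)).
  { replace ((r * rho) * (r * rho)) with (r * r * (rho * rho) * (c * c + sn * sn)) by (rewrite Hcs; ring).
    rewrite Hrho, Edt, Ecr. ring. }
  assert (HS : sqrt (1 + (cr / dt)²) = r * rho / dt).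
  { replace (1 + (cr / dt)²) with ((r * rho / dt)²) by (unfold Rsqr; field_simplify_eq; nra).
    apply sqrt_Rsqr. apply Rlt_le, Rdiv_lt_0_compat; nra. }
  rewrite cos_atan, sin_atan, HS.
  assert (E1 : c * dt - sn * cr = r * f1) by (rewrite Edt, Ecr; rewrite <- (Rmult_1_r (r * f1)), <- Hcs; ring).
  assert (E2 : sn * dt + c * cr = r * f2) by (rewrite Edt, Ecr; rewrite <- (Rmult_1_r (r * f2)), <- Hcs; ring).
  split.
  - transitivity ((c * dt - sn * cr) / r); [rewrite E1; field; lra | field; split; lra].
  - transitivity ((sn * dt + c * cr) / r); [rewrite E2; field; lra | field; split; lra].
Qed.

(* The angle of [F] is that of [G] plus [atan (G x F / G . F)], a continuous correction
   that returns to its initial value, so the winding numbers agree. *)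
Lemma tangent_winding_of_pos_dot G F n :
  periodic1 G -> periodic1 F -> vcont G -> vcont F -> (forall s, G s <> (0,0)) ->
  tangent_winding G n -> (forall s, 0 < fst (G s) * fst (F s) + snd (G s) * snd (F s)) ->
  tangent_winding F n.
Proof.
  intros PG PF CG CF Hnz [th [Hth [Hrep Hw]]] Hdt.
  set (dt := fun s => fst (G s) * fst (F s) + snd (G s) * snd (F s)) in Hdt.
  set (cr := fun s => fst (G s) * snd (F s) - snd (G s) * fst (F s)).
  exists (fun s => th s + atan (cr s / dt s)). split; [|split].
  - intros x. destruct (CG x) as [G1 G2]. destruct (CF x) as [F1 F2].
    apply (continuity_pt_plus th (fun s => atan (cr s / dt s))); [apply Hth|].
    apply (continuity_pt_comp (fun s => cr s / dt s) atan).
    + apply (continuity_pt_div cr dt); [| | apply Rgt_not_eq, Hdt].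
      * apply (continuity_pt_minus (fun s => fst (G s) * snd (F s)) (fun s => snd (G s) * fst (F s)));
          [apply (continuity_pt_mult (fun s => fst (G s)) (fun s => snd (F s)))
          | apply (continuity_pt_mult (fun s => snd (G s)) (fun s => fst (F s)))]; auto.
      * apply (continuity_pt_plus (fun s => fst (G s) * fst (F s)) (fun s => snd (G s) * snd (F s)));
          [apply (continuity_pt_mult (fun s => fst (G s)) (fun s => fst (F s)))
          | apply (continuity_pt_mult (fun s => snd (G s)) (fun s => snd (F s)))]; auto.
    + apply derivable_continuous_pt. eexists. apply derivable_pt_lim_atan.
  - intros s. cbv beta. specialize (Hrep s). pose proof (vnorm_gt0 _ (Hnz s)) as Hr.
    assert (E1 : fst (G s) = vnorm (G s) * cos (th s)) by (rewrite Hrep at 1; auto).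
    assert (E2 : snd (G s) = vnorm (G s) * sin (th s)) by (rewrite Hrep at 1; auto).
    destruct (polar_form_atan (vnorm (G s)) (vnorm (F s)) (cos (th s)) (sin (th s))
                (fst (F s)) (snd (F s)) (dt s) (cr s)) as [A1 A2]; auto.
    + pose proof (sin2_cos2 (th s)). unfold Rsqr in H. lra.
    + apply vnorm_sq.
    + apply vnorm_ge0.
    + unfold dt; rewrite E1, E2; ring.
    + unfold cr; rewrite E1, E2; ring.
    + apply Hdt.
    + rewrite cos_plus, sin_plus. apply injective_projections; simpl.
      * rewrite A1 at 1; ring.
      * rewrite A2 at 1; ring.
  - assert (dt 1 = dt 0 /\ cr 1 = cr 0) as [D1 D2].
    { unfold dt, cr. rewrite <- (Rplus_0_l 1), PG, PF. auto. }
    rewrite D1, D2. lra.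
Qed.

Lemma dot_pos_of_vnorm_sub_lt u v : vnorm (vsub v u) < vnorm u ->
  0 < fst u * fst v + snd u * snd v.
Proof.
  intros H. pose proof (vnorm_ge0 (vsub v u)).
  assert (vnorm (vsub v u) * vnorm (vsub v u) < vnorm u * vnorm u) by nra.
  rewrite !vnorm_sq in H1. simpl in H1. nra.
Qed.

Lemma in_I_of_C1_near n g f m e : in_I n g -> (forall s, m <= vnorm (dcurve g s)) -> e < m ->
  C1_near g e f -> in_I n f.
Proof.
  intros Hg Hlow Hem [HCf [Hf0 Hnear]].
  destruct (in_I_dcurve n g Hg) as [HCg [Hnz [Hw [Hg0 Hg0']]]].
  assert (Hdot : forall s, 0 < fst (dcurve g s) * fst (dcurve f s) + snd (dcurve g s) * snd (dcurve f s)).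
  { intros s. apply dot_pos_of_vnorm_sub_lt. pose proof (proj2 (Hnear s)). pose proof (Hlow s). lra. }
  destruct HCg as [Pg [Dg Cg]]. destruct HCf as [Pf [Df Cf]].
  exists (dcurve f). split; [split; [|split]; auto|]. split; [|split; [|split]]; auto.
  - intros s E. specialize (Hdot s). rewrite E in Hdot. simpl in Hdot. lra.
  - apply (tangent_winding_of_pos_dot (dcurve g)); auto.
    + exact (curve_deriv_periodic _ _ Pg Dg).
    + exact (curve_deriv_periodic _ _ Pf Df).
  - specialize (Hdot 0). rewrite Hg0, Hf0 in Hdot. nra.
Qed.

Lemma in_I_C1_open n g : in_I n g -> C1_open_at (in_I n) g.
Proof.
  intros Hg. destruct (in_I_dcurve n g Hg) as [[P [D C]] [Nz _]].
  destruct (periodic_curve_lower_bound (dcurve g) (curve_deriv_periodic _ _ P D) C Nz) as [m [Hm Hlow]].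
  exists (m / 2). split; [lra|]. intros f. apply (in_I_of_C1_near n g f m); auto. lra.
Qed.

(** * Being an embedding is a [C^1]-open condition *)

Lemma periodic_embedding_neq g x y : periodic1 g -> is_embedding g -> 0 < y - x < 1 -> g x <> g y.
Proof.
  intros P E Hxy Eq.
  destruct (periodic_reduce _ g P x) as [a [Ha [Ex [k Hk]]]].
  destruct (periodic_reduce _ g P y) as [b [Hb [Ey [k' Hk']]]].
  assert (a = b) as <- by (apply E; auto; congruence).
  assert (Hint : IZR (k' - k) = y - x) by (rewrite minus_IZR; lra).
  assert (0 < k' - k < 1)%Z as [? ?] by (split; [apply lt_0_IZR | apply lt_IZR]; lra). lia.
Qed.

(* If [f'] stays within [m/4] of [G], which has norm at least [m] and oscillates by at most
   [m/4] on intervals of length [eta0], then [f'] has a positive component along [G x] on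
   [[x, y]], so [f x <> f y] by the mean value theorem. *)
Lemma curve_injective_at_small_scale f F G x y m eta0 :
  curve_deriv f F -> 0 < m -> (forall s, m <= vnorm (G s)) ->
  (forall s, vnorm (vsub (F s) (G s)) <= m / 4) ->
  (forall s s', Rabs (s - s') < eta0 -> vnorm (vsub (G s) (G s')) <= m / 4) ->
  x < y -> y - x < eta0 -> f x <> f y.
Proof.
  intros Hd Hm Hlow HFG Hunif Hxy Hy Eq.
  set (u := G x).
  destruct (MVT_cor2 (fun t => fst u * fst (f t) + snd u * snd (f t))
                     (fun t => fst u * fst (F t) + snd u * snd (F t)) x y Hxy) as [xi [Hxi Hxi']].
  { intros c _. destruct (Hd c) as [D1 D2].
    apply (derivable_pt_lim_plus (fun t => fst u * fst (f t)) (fun t => snd u * snd (f t))).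
    - apply (derivable_pt_lim_scal (fun t => fst (f t))); auto.
    - apply (derivable_pt_lim_scal (fun t => snd (f t))); auto. }
  rewrite Eq in Hxi.
  assert (Hz : fst u * fst (F xi) + snd u * snd (F xi) = 0).
  { assert ((fst u * fst (F xi) + snd u * snd (F xi)) * (y - x) = 0) as [|] % Rmult_integral by lra;
      auto; lra. }
  pose proof (dot_ge_opp_vnorm u (vsub (F xi) (G xi))) as A1.
  pose proof (dot_ge_opp_vnorm u (vsub (G xi) u)) as A2.
  pose proof (HFG xi) as A3.
  assert (Hu : vnorm (vsub (G xi) u) <= m / 4) by (apply Hunif; rewrite Rabs_right; lra).
  pose proof (vnorm_sq u) as A4. pose proof (Hlow x) as A5. fold u in A5.
  pose proof (vnorm_ge0 (vsub (F xi) (G xi))). pose proof (vnorm_ge0 (vsub (G xi) u)).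
  simpl in A1, A2.
  assert (A8 : fst u * fst (F xi) + snd u * snd (F xi) =
          (fst u * fst u + snd u * snd u) + (fst u * (fst (F xi) - fst (G xi)) + snd u * (snd (F xi) - snd (G xi)))
          + (fst u * (fst (G xi) - fst u) + snd u * (snd (G xi) - snd u))) by ring.
  rewrite <- A4, Hz in A8.
  assert (vnorm u * vnorm (vsub (F xi) (G xi)) <= vnorm u * (m / 4)) by (apply Rmult_le_compat_l; auto using vnorm_ge0).
  assert (vnorm u * vnorm (vsub (G xi) u) <= vnorm u * (m / 4)) by (apply Rmult_le_compat_l; auto using vnorm_ge0).
  nra.
Qed.

Lemma embedding_separation g eta : periodic1 g -> vcont g -> is_embedding g -> 0 < eta < 1/2 ->
  exists c, 0 < c /\ forall x y, 0 <= x <= 1 -> 0 <= y <= 1 ->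
    c <= vnorm (vsub (g x) (g (x + eta + y * (1 - 2 * eta)))).
Proof.
  intros P C E Heta.
  destruct (box_pos_lower_bound 0 1 0 1 (fun x y => vnorm (vsub (g x) (g (x + eta + y * (1 - 2 * eta))))))
    as [c [Hc H]].
  2: { exists c; split; auto. intros x y Hx Hy. apply H. split; auto. }
  intros u v [Hu Hv].
  set (u' := u + eta + v * (1 - 2 * eta)).
  set (p := vnorm (vsub (g u) (g u'))).
  assert (Hp : 0 < p).
  { apply vnorm_gt0. intros Z. apply (periodic_embedding_neq g u u' P E); [unfold u'; nra|].
    unfold vsub in Z. inversion Z. apply injective_projections; lra. }
  destruct (vcont_eps g u C (p/4)) as [r1 [Hr1 D1]]; [lra|].
  destruct (vcont_eps g u' C (p/4)) as [r2 [Hr2 D2]]; [lra|].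
  exists (Rmin r1 (r2/2)). split; [apply Rmin_pos; lra|].
  exists (p / 2). split; [lra|]. intros x y _ Hx Hy.
  pose proof (Rmin_l r1 (r2/2)); pose proof (Rmin_r r1 (r2/2)).
  assert (Rabs ((x + eta + y * (1 - 2 * eta)) - u') < r2).
  { unfold u'. replace (x + eta + y * (1 - 2 * eta) - (u + eta + v * (1 - 2 * eta)))
      with ((x - u) + (y - v) * (1 - 2 * eta)) by ring.
    eapply Rle_lt_trans; [apply Rabs_triang|]. rewrite Rabs_mult, (Rabs_right (1 - 2 * eta)) by lra.
    pose proof (Rabs_pos (y - v)). nra. }
  specialize (D1 x ltac:(lra)). specialize (D2 _ H1).
  pose proof (vnorm_sub_tri (g u) (g x) (g u')).
  pose proof (vnorm_sub_tri (g x) (g (x + eta + y * (1 - 2 * eta))) (g u')).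
  rewrite vnorm_sub_sym in D1. fold p in H2. lra.
Qed.

(* Pairs at distance at most [eta] (up to a period) are handled by
   [curve_injective_at_small_scale], the other ones by [embedding_separation]. *)
Lemma embedding_C1_open n g : in_I n g -> is_embedding g -> C1_open_at is_embedding g.
Proof.
  intros Hg E.
  destruct (in_I_dcurve n g Hg) as [[P [Hd C]] [Hnz _]].
  set (G := dcurve g) in *.
  assert (PG : periodic1 G) by exact (curve_deriv_periodic _ _ P Hd).
  destruct (periodic_curve_lower_bound G PG C Hnz) as [m [Hm Hlow]].
  destruct (periodic_curve_unif_cont G PG C (m / 4)) as [eta0 [Heta0 Hunif]]; [lra|].
  set (eta := Rmin (eta0 / 2) (1 / 4)).
  assert (Heta : 0 < eta < 1 / 2 /\ eta < eta0).
  { unfold eta. pose proof (Rmin_l (eta0/2) (1/4)). pose proof (Rmin_r (eta0/2) (1/4)).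
    pose proof (Rmin_pos (eta0/2) (1/4) ltac:(lra) ltac:(lra)). lra. }
  clearbody eta.
  destruct (embedding_separation g eta P (curve_deriv_vcont _ _ Hd) E (proj1 Heta)) as [c [Hc Hfar]].
  exists (Rmin (m / 4) (c / 3)). split; [apply Rmin_pos; lra|].
  intros f [[Pf [Hdf Cf]] [_ Hnear]]. fold G in Hnear.
  assert (HFG : forall s, vnorm (vsub (dcurve f s) (G s)) <= m / 4).
  { intros s. eapply Rle_trans; [apply (Hnear s) | apply Rmin_l]. }
  assert (Hfg : forall s, vnorm (vsub (f s) (g s)) <= c / 3).
  { intros s. eapply Rle_trans; [apply (Hnear s) | apply Rmin_r]. }
  assert (Near : forall x y, x < y -> y - x <= eta -> f x <> f y).
  { intros x y Hxy Hy. apply (curve_injective_at_small_scale f (dcurve f) G x y m eta0); auto. lra. }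
  assert (Main : forall x y, 0 <= x < 1 -> 0 <= y < 1 -> x < y -> f x <> f y).
  { intros x y Hx Hy Hxy Eq.
    destruct (Rle_dec (y - x) eta); [apply (Near x y); auto|].
    destruct (Rle_dec (1 - eta) (y - x)).
    - apply (Near y (x + 1)); [lra | lra | rewrite Pf; auto].
    - set (t := (y - x - eta) / (1 - 2 * eta)).
      assert (Ht : 0 <= t <= 1).
      { unfold t. split.
        - apply Rmult_le_pos; [lra | left; apply Rinv_0_lt_compat; lra].
        - apply Rmult_le_reg_r with (1 - 2 * eta); [lra|].
          unfold Rdiv; rewrite Rmult_assoc, Rinv_l by lra. lra. }
      assert (Ey : y = x + eta + t * (1 - 2 * eta)) by (unfold t; field; lra).
      clearbody t. pose proof (Hfar x t ltac:(lra) Ht) as Hsep. rewrite <- Ey in Hsep.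
      pose proof (vnorm_sub_tri (g x) (f y) (g y)) as Htri.
      pose proof (Hfg x) as H2. pose proof (Hfg y) as H3. rewrite vnorm_sub_sym, Eq in H2. lra. }
  intros x y Hx Hy Eq. destruct (Rtotal_order x y) as [Hl | [He | Hl]]; auto.
  - exfalso; apply (Main x y); auto.
  - exfalso; apply (Main y x); auto.
Qed.

(** * A [C^1] partition of unity *)

Lemma Rabs_sin_le a : Rabs (sin a) <= Rabs a.
Proof.
  assert (K : forall a, 0 < a -> Rabs (sin a) <= a).
  { intros b Hb. destruct (MVT_cor2 sin cos 0 b Hb) as [c [Hc _]].
    - intros; apply derivable_pt_lim_sin.
    - rewrite sin_0 in Hc. pose proof (COS_bound c). apply Rabs_le. nra. }
  destruct (Rtotal_order a 0) as [H | [-> | H]].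
  - rewrite <- (Ropp_involutive a) at 1. rewrite sin_neg, Rabs_Ropp, (Rabs_left a) by lra. apply K; lra.
  - rewrite sin_0; lra.
  - rewrite (Rabs_right a) by lra. apply K; auto.
Qed.

Lemma derivable_pt_lim_local f g x l : (exists d, 0 < d /\ forall y, Rabs (y - x) < d -> f y = g y) ->
  derivable_pt_lim g x l -> derivable_pt_lim f x l.
Proof.
  intros [d [Hd E]] H e He. destruct (H e He) as [d' Hd'].
  exists (mkposreal _ (Rmin_pos d d' Hd (cond_pos d'))). intros h Hh0 Hh. simpl in Hh.
  pose proof (Rmin_l d d'); pose proof (Rmin_r d d').
  rewrite !E; [apply Hd'; auto; lra | rewrite Rminus_diag, Rabs_R0; auto |].
  replace (x + h - x) with h by ring. lra.
Qed.

Lemma continuity_pt_local f g x : (exists d, 0 < d /\ forall y, Rabs (y - x) < d -> f y = g y) ->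
  continuity_pt g x -> continuity_pt f x.
Proof.
  intros [d [Hd E]] H e He. destruct (H e He) as [d' [Hd' H']].
  exists (Rmin d d'). split; [apply Rmin_pos; auto|]. intros y [Hy1 Hy2].
  simpl in *. unfold R_dist in *. pose proof (Rmin_l d d'); pose proof (Rmin_r d d').
  rewrite !E; [apply H'; split; auto; lra | rewrite Rminus_diag, Rabs_R0; auto | lra].
Qed.

Lemma derivable_pt_lim_of_quadratic_bound f x0 C : 0 < C -> f x0 = 0 ->
  (forall y, Rabs (f y) <= C * (y - x0) * (y - x0)) -> derivable_pt_lim f x0 0.
Proof.
  intros HC H0 Hb e He. assert (Hp : 0 < e / (2 * C)) by (apply Rdiv_lt_0_compat; lra).
  exists (mkposreal _ Hp). intros h Hh Hh'. simpl in Hh'. rewrite H0.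
  specialize (Hb (x0 + h)). replace (x0 + h - x0) with h in Hb by ring.
  rewrite !Rminus_0_r. unfold Rdiv. rewrite Rabs_mult, Rabs_inv.
  apply Rmult_lt_reg_r with (Rabs h); [apply Rabs_pos_lt; auto|].
  rewrite Rmult_assoc, Rinv_l, Rmult_1_r by (apply Rabs_no_R0; auto).
  assert (Rabs h * Rabs h = h * h) by (rewrite <- Rabs_mult; apply Rabs_right; nra).
  pose proof (Rabs_pos_lt h Hh).
  assert (C * Rabs h < e / 2).
  { apply Rmult_lt_reg_l with (/ C); [apply Rinv_0_lt_compat; auto|].
    rewrite <- Rmult_assoc, Rinv_l by lra. replace (/ C * (e / 2)) with (e / (2 * C)) by (field; lra). lra. }
  nra.
Qed.

Lemma continuity_pt_of_linear_bound f x0 C : f x0 = 0 ->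
  (forall y, Rabs (f y) <= C * Rabs (y - x0)) -> continuity_pt f x0.
Proof.
  intros H0 Hb e He. pose proof (Rabs_pos C). pose proof (Rle_abs C).
  exists (e / (Rabs C + 1)). split; [apply Rdiv_lt_0_compat; lra|].
  intros y [_ Hy]. simpl in *. unfold R_dist in *. rewrite H0, Rminus_0_r.
  pose proof (Rabs_pos (y - x0)). pose proof (Hb y).
  apply Rle_lt_trans with ((Rabs C + 1) * Rabs (y - x0)); [nra|].
  apply Rmult_lt_reg_l with (/ (Rabs C + 1)); [apply Rinv_0_lt_compat; lra|].
  rewrite <- Rmult_assoc, Rinv_l, Rmult_1_l by lra.
  replace (/ (Rabs C + 1) * e) with (e / (Rabs C + 1)) by (field; lra). auto.
Qed.

Definition bump (x : R) : R := if Rle_dec (Rabs x) 1 then cos (PI / 2 * x) * cos (PI / 2 * x) else 0.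
Definition dbump (x : R) : R := if Rle_dec (Rabs x) 1 then - (PI / 2) * sin (PI * x) else 0.

Lemma bump_in x : Rabs x <= 1 -> bump x = cos (PI / 2 * x) * cos (PI / 2 * x).
Proof. unfold bump; destruct Rle_dec; tauto. Qed.

Lemma dbump_in x : Rabs x <= 1 -> dbump x = - (PI / 2) * sin (PI * x).
Proof. unfold dbump; destruct Rle_dec; tauto. Qed.

Lemma Rabs_eq1 x : Rabs x = 1 -> x = 1 \/ x = -1.
Proof. intros H. destruct (Rcase_abs x); [rewrite Rabs_left in H | rewrite Rabs_right in H]; lra. Qed.

Lemma bump_out x : 1 <= Rabs x -> bump x = 0.
Proof.
  unfold bump; destruct Rle_dec; auto. intros H.
  destruct (Rabs_eq1 x) as [-> | ->]; [lra | |].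
  - rewrite Rmult_1_r, cos_PI2; ring.
  - replace (PI / 2 * -1) with (- (PI/2)) by ring. rewrite cos_neg, cos_PI2; ring.
Qed.

Lemma dbump_out x : 1 <= Rabs x -> dbump x = 0.
Proof.
  unfold dbump; destruct Rle_dec; auto. intros H.
  destruct (Rabs_eq1 x) as [-> | ->]; [lra | |].
  - rewrite Rmult_1_r, sin_PI; ring.
  - replace (PI * -1) with (- PI) by ring. rewrite sin_neg, sin_PI; ring.
Qed.

Lemma bump_even x : bump (- x) = bump x.
Proof.
  unfold bump. rewrite Rabs_Ropp. destruct Rle_dec; auto.
  replace (PI / 2 * - x) with (- (PI / 2 * x)) by ring. rewrite cos_neg; auto.
Qed.

Lemma dbump_odd x : dbump (- x) = - dbump x.
Proof.
  unfold dbump. rewrite Rabs_Ropp. destruct Rle_dec; [|ring].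
  replace (PI * - x) with (- (PI * x)) by ring. rewrite sin_neg; ring.
Qed.

Lemma bump_range x : 0 <= bump x <= 1.
Proof. unfold bump; destruct Rle_dec; [pose proof (COS_bound (PI/2*x)); split; nra | lra]. Qed.

Lemma dbump_bound x : Rabs (dbump x) <= 2.
Proof.
  unfold dbump; destruct Rle_dec; [|rewrite Rabs_R0; lra].
  pose proof PI_4. pose proof PI_RGT_0. pose proof (SIN_bound (PI * x)).
  rewrite Rabs_mult, Rabs_Ropp, (Rabs_right (PI / 2)) by lra.
  assert (Rabs (sin (PI * x)) <= 1) by (apply Rabs_le; lra).
  pose proof (Rabs_pos (sin (PI * x))). nra.
Qed.

Lemma bump_0 : bump 0 = 1.
Proof. rewrite bump_in by (rewrite Rabs_R0; lra). rewrite Rmult_0_r, cos_0; ring. Qed.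

Lemma Rabs_lt1_of_bump_pos x : 0 < bump x -> Rabs x < 1.
Proof. intros H. destruct (Rlt_le_dec (Rabs x) 1); auto. rewrite bump_out in H; lra. Qed.

Lemma bump_add_shift x : 0 <= x <= 1 -> bump x + bump (x - 1) = 1.
Proof.
  intros H. rewrite (bump_in x) by (rewrite Rabs_right; lra).
  rewrite bump_in by (rewrite Rabs_left1; lra).
  replace (PI / 2 * (x - 1)) with (PI / 2 * x - PI / 2) by ring.
  rewrite cos_minus, cos_PI2, sin_PI2. pose proof (sin2_cos2 (PI/2*x)). unfold Rsqr in H0. nra.
Qed.

Lemma bump_near1 y : Rabs (bump y) <= 4 * (y - 1) * (y - 1).
Proof.
  rewrite Rabs_right by (apply Rle_ge, bump_range).
  pose proof (Rle_0_sqr (y - 1)) as Hsq. unfold Rsqr in Hsq.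
  unfold bump; destruct Rle_dec as [_|_]; [|lra].
  replace (PI / 2 * y) with (PI / 2 - PI / 2 * (1 - y)) by ring. rewrite cos_shift.
  pose proof (Rsqr_le_abs_1 _ _ (Rabs_sin_le (PI / 2 * (1 - y)))). unfold Rsqr in H.
  pose proof PI_4; pose proof PI_RGT_0.
  pose proof (Rmult_le_compat_r ((1 - y) * (1 - y)) (PI * PI) 16 ltac:(nra) ltac:(nra)). lra.
Qed.

Lemma bump_near_m1 y : Rabs (bump y) <= 4 * (y - -1) * (y - -1).
Proof.
  rewrite <- (Ropp_involutive y), bump_even.
  replace (- - y - -1) with (- (- y - 1)) by ring. pose proof (bump_near1 (- y)). nra.
Qed.

Lemma dbump_near1 y : Rabs (dbump y) <= 8 * Rabs (y - 1).
Proof.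
  unfold dbump; destruct Rle_dec; [|rewrite Rabs_R0; pose proof (Rabs_pos (y - 1)); lra].
  replace (sin (PI * y)) with (- sin (PI * (y - 1))) by (rewrite <- neg_sin; f_equal; ring).
  pose proof (Rabs_sin_le (PI * (y - 1))). pose proof PI_4; pose proof PI_RGT_0.
  rewrite Rabs_mult in H. rewrite (Rabs_right PI) in H by lra.
  rewrite Rabs_mult, !Rabs_Ropp, (Rabs_right (PI/2)) by lra.
  pose proof (Rabs_pos (y - 1)). pose proof (Rabs_pos (sin (PI * (y - 1)))). nra.
Qed.

Lemma dbump_near_m1 y : Rabs (dbump y) <= 8 * Rabs (y - -1).
Proof.
  rewrite <- (Ropp_involutive y), dbump_odd, Rabs_Ropp.
  replace (- - y - -1) with (- (- y - 1)) by ring. rewrite Rabs_Ropp. apply dbump_near1.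
Qed.

Lemma derivable_pt_lim_linear c x : derivable_pt_lim (fun y => c * y) x c.
Proof.
  pose proof (derivable_pt_lim_scal id c x 1 (derivable_pt_lim_id x)) as H.
  rewrite Rmult_1_r in H. exact H.
Qed.

Lemma derivable_pt_lim_cos_sq x :
  derivable_pt_lim (fun y => cos (PI / 2 * y) * cos (PI / 2 * y)) x (- (PI / 2) * sin (PI * x)).
Proof.
  assert (D : derivable_pt_lim (fun y => cos (PI / 2 * y)) x (- sin (PI / 2 * x) * (PI / 2))).
  { apply (derivable_pt_lim_comp (fun y => PI / 2 * y) cos); [|apply derivable_pt_lim_cos].
    apply derivable_pt_lim_linear. }
  replace (- (PI / 2) * sin (PI * x))
    with ((- sin (PI / 2 * x) * (PI / 2)) * cos (PI / 2 * x) + cos (PI / 2 * x) * (- sin (PI / 2 * x) * (PI / 2)))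
    by (replace (PI * x) with (2 * (PI / 2 * x)) by field; rewrite sin_2a; ring).
  apply (derivable_pt_lim_mult (fun y => cos (PI / 2 * y)) (fun y => cos (PI / 2 * y))); auto.
Qed.

Lemma near_interior x y : Rabs x < 1 -> Rabs (y - x) < 1 - Rabs x -> Rabs y <= 1.
Proof.
  intros _ H. pose proof (Rabs_triang (y - x) x). replace (y - x + x) with y in H0 by ring. lra.
Qed.

Lemma near_exterior x y : 1 < Rabs x -> Rabs (y - x) < Rabs x - 1 -> 1 <= Rabs y.
Proof.
  intros _ H. pose proof (Rabs_triang (x - y) y). replace (x - y + y) with x in H0 by ring.
  rewrite <- Rabs_Ropp in H. replace (- (y - x)) with (x - y) in H by ring. lra.
Qed.

Lemma bump_deriv x : derivable_pt_lim bump x (dbump x).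
Proof.
  destruct (Rtotal_order (Rabs x) 1) as [H | [H | H]].
  - rewrite dbump_in by lra.
    apply derivable_pt_lim_local with (fun y => cos (PI / 2 * y) * cos (PI / 2 * y));
      [|apply derivable_pt_lim_cos_sq].
    exists (1 - Rabs x). split; [lra|]. intros y Hy. apply bump_in, (near_interior x); auto.
  - rewrite dbump_out by lra. destruct (Rabs_eq1 x H) as [-> | ->].
    + apply (derivable_pt_lim_of_quadratic_bound bump 1 4); [lra | | apply bump_near1].
      apply bump_out; rewrite Rabs_R1; lra.
    + apply (derivable_pt_lim_of_quadratic_bound bump (-1) 4); [lra | | apply bump_near_m1].
      apply bump_out; rewrite Rabs_m1; lra.
  - rewrite dbump_out by lra. apply derivable_pt_lim_local with (fun _ => 0); [|apply derivable_pt_lim_const].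
    exists (Rabs x - 1). split; [lra|]. intros y Hy. apply bump_out, (near_exterior x); auto.
Qed.

Lemma dbump_cont x : continuity_pt dbump x.
Proof.
  destruct (Rtotal_order (Rabs x) 1) as [H | [H | H]].
  - apply continuity_pt_local with (fun y => - (PI / 2) * sin (PI * y)).
    + exists (1 - Rabs x). split; [lra|]. intros y Hy. apply dbump_in, (near_interior x); auto.
    + apply derivable_continuous_pt. eexists.
      apply (derivable_pt_lim_scal (fun y => sin (PI * y))).
      apply (derivable_pt_lim_comp (fun y => PI * y) sin); [|apply derivable_pt_lim_sin].
      apply derivable_pt_lim_linear.
  - destruct (Rabs_eq1 x H) as [-> | ->].
    + apply (continuity_pt_of_linear_bound dbump 1 8); [|apply dbump_near1].
      apply dbump_out; rewrite Rabs_R1; lra.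
    + apply (continuity_pt_of_linear_bound dbump (-1) 8); [|apply dbump_near_m1].
      apply dbump_out; rewrite Rabs_m1; lra.
  - apply continuity_pt_local with (fun _ => 0); [|apply continuity_pt_const; intros ? ?; auto].
    exists (Rabs x - 1). split; [lra|]. intros y Hy. apply dbump_out, (near_exterior x); auto.
Qed.

Lemma bump_lipschitz x y : Rabs (bump x - bump y) <= 2 * Rabs (x - y).
Proof.
  assert (K : forall a b, a < b -> Rabs (bump b - bump a) <= 2 * (b - a)).
  { intros a b Hab. destruct (MVT_cor2 bump dbump a b Hab) as [c [Hc _]]; [intros; apply bump_deriv|].
    rewrite Hc, Rabs_mult, (Rabs_right (b - a)) by lra.
    apply Rmult_le_compat_r; [lra | apply dbump_bound]. }
  destruct (Rtotal_order x y) as [H | [-> | H]].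
  - rewrite <- Rabs_Ropp, (Rabs_left (x - y)) by lra. replace (- (bump x - bump y)) with (bump y - bump x) by ring.
    pose proof (K x y H). lra.
  - rewrite !Rminus_diag, Rabs_R0. lra.
  - rewrite (Rabs_right (x - y)) by lra. apply K; auto.
Qed.

Lemma sum_bump_eq0 N x : INR N + 1 <= x -> sum_f_R0 (fun j => bump (x - INR j)) N = 0.
Proof.
  intros H. rewrite (sum_eq _ (fun _ => 0)), sum_cte; [ring|].
  intros j Hj. apply le_INR in Hj. apply bump_out. rewrite Rabs_right; lra.
Qed.

Lemma sum_bump_eq1 N x : 0 <= x <= INR N -> sum_f_R0 (fun j => bump (x - INR j)) N = 1.
Proof.
  revert x. induction N as [|N IH]; intros x Hx.
  - simpl in *. replace x with 0 by lra. rewrite Rminus_0_r, bump_0; auto.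
  - rewrite tech5. pose proof (S_INR N) as HS. rewrite HS in Hx. destruct (Rle_dec x (INR N)).
    + rewrite IH, bump_out by (try rewrite HS, Rabs_left1; lra). ring.
    + destruct N as [|N].
      * rewrite HS. simpl in *. rewrite Rminus_0_r, Rplus_0_l. apply bump_add_shift. lra.
      * pose proof (S_INR N). rewrite tech5, sum_bump_eq0 by lra.
        rewrite HS. replace (x - (INR (S N) + 1)) with ((x - INR (S N)) - 1) by ring.
        rewrite Rplus_0_l. apply bump_add_shift. lra.
Qed.

(** * [C^1] maps on the cylinder [[0,1] x S^1] *)

Lemma derivable_pt_lim_eps f x l : derivable_pt_lim f x l -> forall e, 0 < e -> exists d, 0 < d /\
  forall y, Rabs (y - x) < d -> Rabs (f y - f x - l * (y - x)) <= e * Rabs (y - x).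
Proof.
  intros H e He. destruct (H e He) as [d Hd]. exists d. split; [apply cond_pos|].
  intros y Hy. destruct (Req_dec y x) as [-> | Hne].
  - rewrite !Rminus_diag, Rmult_0_r, Rminus_0_r, Rabs_R0. lra.
  - specialize (Hd (y - x) ltac:(lra) Hy). replace (x + (y - x)) with y in Hd by ring.
    replace (f y - f x - l * (y - x)) with (((f y - f x) / (y - x) - l) * (y - x)) by (field; lra).
    rewrite Rabs_mult. apply Rmult_le_compat_r; [apply Rabs_pos | lra].
Qed.

Lemma curve_deriv_eps c c' s : curve_deriv c c' -> forall e, 0 < e -> exists d, 0 < d /\
  forall y, Rabs (y - s) < d -> vnorm (vsub (vsub (c y) (c s)) (vscal (y - s) (c' s))) <= e * Rabs (y - s).
Proof.
  intros H e He. destruct (H s) as [H1 H2].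
  destruct (derivable_pt_lim_eps _ _ _ H1 (e/2)) as [d1 [Hd1 D1]]; [lra|].
  destruct (derivable_pt_lim_eps _ _ _ H2 (e/2)) as [d2 [Hd2 D2]]; [lra|].
  exists (Rmin d1 d2). split; [apply Rmin_pos; auto|]. intros y Hy.
  pose proof (Rmin_l d1 d2); pose proof (Rmin_r d1 d2).
  eapply Rle_trans; [apply vnorm_le_Rabs_sum|]. simpl.
  specialize (D1 y ltac:(lra)). specialize (D2 y ltac:(lra)).
  rewrite !(Rmult_comm (y - s)). lra.
Qed.

Definition cyl_taylor_err (H Dt Ds : R -> curve) t s t' s' : vec :=
  vsub (vsub (H t' s') (H t s)) (vadd (vscal (t' - t) (Dt t s)) (vscal (s' - s) (Ds t s))).

Lemma C1_cyl_with_add H1 D1 E1 H2 D2 E2 : C1_cyl_with H1 D1 E1 -> C1_cyl_with H2 D2 E2 ->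
  C1_cyl_with (fun t s => vadd (H1 t s) (H2 t s)) (fun t s => vadd (D1 t s) (D2 t s))
              (fun t s => vadd (E1 t s) (E2 t s)).
Proof.
  intros [P1 [F1 C1]] [P2 [F2 C2]]. split; [|split].
  - intros t s Ht. rewrite P1, P2; auto.
  - intros t s Ht e He.
    destruct (F1 t s Ht (e/2)) as [d1 [Hd1 G1]]; [lra|].
    destruct (F2 t s Ht (e/2)) as [d2 [Hd2 G2]]; [lra|].
    exists (Rmin d1 d2). split; [apply Rmin_pos; auto|]. intros t' s' Ht' Ht1 Hs1.
    pose proof (Rmin_l d1 d2); pose proof (Rmin_r d1 d2).
    specialize (G1 t' s' Ht' ltac:(lra) ltac:(lra)). specialize (G2 t' s' Ht' ltac:(lra) ltac:(lra)).
    match goal with |- vnorm ?X <= _ =>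
      replace X with (vadd (cyl_taylor_err H1 D1 E1 t s t' s') (cyl_taylor_err H2 D2 E2 t s t' s'))
        by (unfold cyl_taylor_err; veq) end.
    eapply Rle_trans; [apply vnorm_triangle|]. unfold cyl_taylor_err. lra.
  - intros t s Ht e He.
    destruct (C1 t s Ht (e/2)) as [d1 [Hd1 G1]]; [lra|].
    destruct (C2 t s Ht (e/2)) as [d2 [Hd2 G2]]; [lra|].
    exists (Rmin d1 d2). split; [apply Rmin_pos; auto|]. intros t' s' Ht' Ht1 Hs1.
    pose proof (Rmin_l d1 d2); pose proof (Rmin_r d1 d2).
    destruct (G1 t' s' Ht' ltac:(lra) ltac:(lra)) as [A1 B1].
    destruct (G2 t' s' Ht' ltac:(lra) ltac:(lra)) as [A2 B2].
    split; match goal with |- vnorm (vsub (vadd ?a ?b) (vadd ?c ?d)) <= _ =>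
      replace (vsub (vadd a b) (vadd c d)) with (vadd (vsub a c) (vsub b d)) by veq end;
      eapply Rle_trans; try apply vnorm_triangle; lra.
Qed.

Lemma vnorm_scal_le_div a v e : 0 < e -> vnorm v <= e / (Rabs a + 1) -> vnorm (vscal a v) <= e.
Proof.
  intros He Hv. rewrite vnorm_scal. pose proof (Rabs_pos a).
  apply Rle_trans with (Rabs a * (e / (Rabs a + 1))); [apply Rmult_le_compat_l; auto|].
  apply Rmult_le_reg_r with (Rabs a + 1); [lra|].
  replace (Rabs a * (e / (Rabs a + 1)) * (Rabs a + 1)) with (Rabs a * e) by (field; lra). nra.
Qed.

Lemma C1_cyl_with_scal a H1 D1 E1 : C1_cyl_with H1 D1 E1 ->
  C1_cyl_with (fun t s => vscal a (H1 t s)) (fun t s => vscal a (D1 t s)) (fun t s => vscal a (E1 t s)).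
Proof.
  intros [P1 [F1 C1]]. pose proof (Rabs_pos a). split; [|split].
  - intros t s Ht. rewrite P1; auto.
  - intros t s Ht e He. destruct (F1 t s Ht (e / (Rabs a + 1))) as [d1 [Hd1 G1]];
      [apply Rdiv_lt_0_compat; lra|].
    exists d1. split; auto. intros t' s' Ht' Ht1 Hs1. specialize (G1 t' s' Ht' Ht1 Hs1).
    match goal with |- vnorm ?X <= _ =>
      replace X with (vscal a (cyl_taylor_err H1 D1 E1 t s t' s')) by (unfold cyl_taylor_err; veq) end.
    pose proof (Rabs_pos (t' - t)). pose proof (Rabs_pos (s' - s)).
    destruct (Req_dec (Rabs (t' - t) + Rabs (s' - s)) 0) as [Hz | Hnz].
    + rewrite Hz, Rmult_0_r in *. rewrite vnorm_scal. pose proof (vnorm_ge0 (cyl_taylor_err H1 D1 E1 t s t' s')).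
      unfold cyl_taylor_err in *. nra.
    + apply vnorm_scal_le_div; [nra|].
      replace (e * (Rabs (t' - t) + Rabs (s' - s)) / (Rabs a + 1))
        with (e / (Rabs a + 1) * (Rabs (t' - t) + Rabs (s' - s))) by (field; lra). exact G1.
  - intros t s Ht e He. destruct (C1 t s Ht (e / (Rabs a + 1))) as [d1 [Hd1 G1]];
      [apply Rdiv_lt_0_compat; lra|].
    exists d1. split; auto. intros t' s' Ht' Ht1 Hs1. destruct (G1 t' s' Ht' Ht1 Hs1) as [A B].
    split.
    + replace (vsub (vscal a (D1 t' s')) (vscal a (D1 t s))) with (vscal a (vsub (D1 t' s') (D1 t s))) by veq.
      apply vnorm_scal_le_div; auto.
    + replace (vsub (vscal a (E1 t' s')) (vscal a (E1 t s))) with (vscal a (vsub (E1 t' s') (E1 t s))) by veq.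
      apply vnorm_scal_le_div; auto.
Qed.

Lemma C1_cyl_with_vsum N (H D E : nat -> R -> curve) :
  (forall j, (j <= N)%nat -> C1_cyl_with (H j) (D j) (E j)) ->
  C1_cyl_with (fun t s => vsum N (fun j => H j t s)) (fun t s => vsum N (fun j => D j t s))
              (fun t s => vsum N (fun j => E j t s)).
Proof.
  induction N as [|N IH]; intros HH.
  - assert (E0 : forall F : nat -> R -> curve, (fun t s => vsum 0 (fun j => F j t s)) = F 0%nat).
    { intros F. do 2 (apply functional_extensionality; intros). apply vsum_0. }
    rewrite !E0. apply HH; lia.
  - apply (C1_cyl_with_add (fun t s => vsum N (fun j => H j t s)) (fun t s => vsum N (fun j => D j t s))
             (fun t s => vsum N (fun j => E j t s)) (H (S N)) (D (S N)) (E (S N)));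
      [apply IH; intros; apply HH; lia | apply HH; lia].
Qed.

Lemma vnorm_scal_sub_le x y u v :
  vnorm (vsub (vscal x u) (vscal y v)) <= Rabs (x - y) * vnorm u + Rabs y * vnorm (vsub u v).
Proof.
  replace (vsub (vscal x u) (vscal y v)) with (vadd (vscal (x - y) u) (vscal y (vsub u v))) by veq.
  eapply Rle_trans; [apply vnorm_triangle|]. rewrite !vnorm_scal. lra.
Qed.

Lemma vscal_cont_at (al : R -> R) (ga : curve) t s : continuity_pt al t -> vcont ga ->
  forall e, 0 < e -> exists d, 0 < d /\ forall t' s', Rabs (t' - t) < d -> Rabs (s' - s) < d ->
    vnorm (vsub (vscal (al t') (ga s')) (vscal (al t) (ga s))) <= e.
Proof.
  intros Ha Hg e He.
  set (K := vnorm (ga s) + 1). assert (HK : 0 < K) by (unfold K; pose proof (vnorm_ge0 (ga s)); lra).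
  set (A := Rabs (al t) + 1). assert (HA : 0 < A) by (unfold A; pose proof (Rabs_pos (al t)); lra).
  destruct (vcont_eps ga s Hg 1) as [d1 [Hd1 D1]]; [lra|].
  destruct (continuity_pt_eps al t Ha (e / (2 * K))) as [d2 [Hd2 D2]]; [apply Rdiv_lt_0_compat; lra|].
  destruct (vcont_eps ga s Hg (e / (2 * A))) as [d3 [Hd3 D3]]; [apply Rdiv_lt_0_compat; lra|].
  exists (Rmin d1 (Rmin d2 d3)). split; [repeat apply Rmin_pos; auto|].
  intros t' s' Ht Hs.
  pose proof (Rmin_l d1 (Rmin d2 d3)); pose proof (Rmin_r d1 (Rmin d2 d3));
    pose proof (Rmin_l d2 d3); pose proof (Rmin_r d2 d3).
  specialize (D1 s' ltac:(lra)). specialize (D2 t' ltac:(lra)). specialize (D3 s' ltac:(lra)).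
  pose proof (vnorm_le_add_sub (ga s') (ga s)).
  eapply Rle_trans; [apply vnorm_scal_sub_le|].
  pose proof (Rabs_pos (al t' - al t)). pose proof (Rabs_pos (al t)).
  pose proof (vnorm_ge0 (ga s')). pose proof (vnorm_ge0 (vsub (ga s') (ga s))).
  assert (Rabs (al t' - al t) * vnorm (ga s') <= e / 2).
  { apply Rle_trans with (e / (2 * K) * K); [apply Rmult_le_compat; unfold K in *; lra | right; field; lra]. }
  assert (Rabs (al t) * vnorm (vsub (ga s') (ga s)) <= e / 2).
  { apply Rle_trans with (A * (e / (2 * A))); [apply Rmult_le_compat; unfold A in *; lra | right; field; lra]. }
  lra.
Qed.

(* Product rule: the error splits into the errors of the two factors. *)
Lemma vscal_taylor_estimate (a : R -> R) (c c' : curve) t l s :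
  derivable_pt_lim a t l -> curve_deriv c c' -> forall e, 0 < e -> exists d, 0 < d /\
  forall t' s', Rabs (t' - t) < d -> Rabs (s' - s) < d ->
    vnorm (vsub (vsub (vscal (a t') (c s')) (vscal (a t) (c s)))
                (vadd (vscal (t' - t) (vscal l (c s))) (vscal (s' - s) (vscal (a t) (c' s)))))
      <= e * (Rabs (t' - t) + Rabs (s' - s)).
Proof.
  intros Ha Dc e He.
  assert (Cc : vcont c) by (eapply curve_deriv_vcont; eauto).
  set (K := vnorm (c s) + 1). set (A1 := Rabs l + 1). set (A0 := Rabs (a t) + 1).
  assert (HK : 0 < K) by (unfold K; pose proof (vnorm_ge0 (c s)); lra).
  assert (HA1 : 0 < A1) by (unfold A1; pose proof (Rabs_pos l); lra).
  assert (HA0 : 0 < A0) by (unfold A0; pose proof (Rabs_pos (a t)); lra).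
  destruct (vcont_eps c s Cc 1) as [d1 [Hd1 D1]]; [lra|].
  destruct (derivable_pt_lim_eps a t l Ha (e / (3 * K))) as [d2 [Hd2 D2]]; [apply Rdiv_lt_0_compat; lra|].
  destruct (vcont_eps c s Cc (e / (3 * A1))) as [d3 [Hd3 D3]]; [apply Rdiv_lt_0_compat; lra|].
  destruct (curve_deriv_eps c c' s Dc (e / (3 * A0))) as [d4 [Hd4 D4]]; [apply Rdiv_lt_0_compat; lra|].
  exists (Rmin (Rmin d1 d2) (Rmin d3 d4)). split; [repeat apply Rmin_pos; auto|].
  intros t' s' Ht Hs.
  pose proof (Rmin_l (Rmin d1 d2) (Rmin d3 d4)). pose proof (Rmin_r (Rmin d1 d2) (Rmin d3 d4)).
  pose proof (Rmin_l d1 d2). pose proof (Rmin_r d1 d2). pose proof (Rmin_l d3 d4). pose proof (Rmin_r d3 d4).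
  specialize (D1 s' ltac:(lra)). specialize (D2 t' ltac:(lra)).
  specialize (D3 s' ltac:(lra)). specialize (D4 s' ltac:(lra)).
  assert (Hn : vnorm (c s') <= K) by (pose proof (vnorm_le_add_sub (c s') (c s)); unfold K; lra).
  set (AA := a t' - a t - l * (t' - t)) in D2.
  match goal with |- vnorm ?X <= _ => replace X with
    (vadd (vadd (vscal AA (c s')) (vscal (l * (t' - t)) (vsub (c s') (c s))))
          (vscal (a t) (vsub (vsub (c s') (c s)) (vscal (s' - s) (c' s))))) by (unfold AA; veq) end.
  eapply Rle_trans; [apply vnorm_triangle|]. eapply Rle_trans; [apply Rplus_le_compat_r, vnorm_triangle|].
  rewrite !vnorm_scal, Rabs_mult.
  pose proof (Rabs_pos AA). pose proof (vnorm_ge0 (c s')). pose proof (Rabs_pos (t' - t)).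
  pose proof (Rabs_pos (s' - s)). pose proof (Rabs_pos (a t)). pose proof (Rabs_pos l).
  pose proof (vnorm_ge0 (vsub (c s') (c s))).
  pose proof (vnorm_ge0 (vsub (vsub (c s') (c s)) (vscal (s' - s) (c' s)))).
  assert (Q1 : Rabs AA * vnorm (c s') <= e / 3 * Rabs (t' - t)).
  { apply Rle_trans with (e / (3 * K) * Rabs (t' - t) * K); [apply Rmult_le_compat; auto | right; field; lra]. }
  assert (Q2 : Rabs l * Rabs (t' - t) * vnorm (vsub (c s') (c s)) <= e / 3 * Rabs (t' - t)).
  { apply Rle_trans with (A1 * Rabs (t' - t) * (e / (3 * A1))); [|right; field; lra].
    apply Rmult_le_compat; [apply Rmult_le_pos | | apply Rmult_le_compat_r |]; unfold A1 in *; auto; lra. }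
  assert (Q3 : Rabs (a t) * vnorm (vsub (vsub (c s') (c s)) (vscal (s' - s) (c' s))) <= e / 3 * Rabs (s' - s)).
  { apply Rle_trans with (A0 * (e / (3 * A0) * Rabs (s' - s))); [|right; field; lra].
    apply Rmult_le_compat; unfold A0 in *; auto; lra. }
  nra.
Qed.

Lemma C1_cyl_with_product (a a' : R -> R) (c c' : curve) :
  (forall t, derivable_pt_lim a t (a' t)) -> (forall t, continuity_pt a' t) -> C1_curve_with c c' ->
  C1_cyl_with (fun t s => vscal (a t) (c s)) (fun t s => vscal (a' t) (c s)) (fun t s => vscal (a t) (c' s)).
Proof.
  intros Ha Ha' [Pc [Dc Cc']].
  assert (Cc : vcont c) by (eapply curve_deriv_vcont; eauto).
  assert (Ca : forall t, continuity_pt a t) by (intros t; apply derivable_continuous_pt; exists (a' t); apply Ha).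
  split; [|split].
  - intros t s _. rewrite Pc; auto.
  - intros t s _ e He. destruct (vscal_taylor_estimate a c c' t (a' t) s (Ha t) Dc e He) as [d [Hd G]].
    exists d. split; auto.
  - intros t s _ e He.
    destruct (vscal_cont_at a' c t s (Ha' t) Cc e He) as [d1 [Hd1 D1]].
    destruct (vscal_cont_at a c' t s (Ca t) Cc' e He) as [d2 [Hd2 D2]].
    exists (Rmin d1 d2). split; [apply Rmin_pos; auto|]. intros t' s' _ Ht Hs.
    pose proof (Rmin_l d1 d2). pose proof (Rmin_r d1 d2).
    split; [apply D1 | apply D2]; lra.
Qed.

(* Probing the Taylor estimate along [(t +- d, s)] (whichever stays in [[0,1]]) and along
   [(t, s + d)] shows that the two partial derivatives are determined. *)
Lemma C1_cyl_deriv_unique (H : R -> curve) t s a b a' b' : I01 t ->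
  (forall e, 0 < e -> exists d, 0 < d /\ forall t' s', I01 t' -> Rabs (t' - t) < d -> Rabs (s' - s) < d ->
     vnorm (vsub (vsub (H t' s') (H t s)) (vadd (vscal (t' - t) a) (vscal (s' - s) b))) <= e * (Rabs (t' - t) + Rabs (s' - s))) ->
  (forall e, 0 < e -> exists d, 0 < d /\ forall t' s', I01 t' -> Rabs (t' - t) < d -> Rabs (s' - s) < d ->
     vnorm (vsub (vsub (H t' s') (H t s)) (vadd (vscal (t' - t) a') (vscal (s' - s) b'))) <= e * (Rabs (t' - t) + Rabs (s' - s))) ->
  a = a' /\ b = b'.
Proof.
  intros Ht F1 F2.
  assert (K : forall e, 0 < e -> exists d, 0 < d /\ forall t' s', I01 t' -> Rabs (t' - t) < d -> Rabs (s' - s) < d ->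
     vnorm (vadd (vscal (t' - t) (vsub a' a)) (vscal (s' - s) (vsub b' b))) <= 2 * e * (Rabs (t' - t) + Rabs (s' - s))).
  { intros e He. destruct (F1 e He) as [d1 [Hd1 G1]]. destruct (F2 e He) as [d2 [Hd2 G2]].
    exists (Rmin d1 d2). split; [apply Rmin_pos; auto|]. intros t' s' Ht' T S.
    pose proof (Rmin_l d1 d2). pose proof (Rmin_r d1 d2).
    specialize (G1 t' s' Ht' ltac:(lra) ltac:(lra)). specialize (G2 t' s' Ht' ltac:(lra) ltac:(lra)).
    match goal with G1 : vnorm ?X <= _, G2 : vnorm ?Y <= _ |- vnorm ?Z <= _ =>
      replace Z with (vsub X Y) by veq end.
    eapply Rle_trans; [apply vnorm_sub_le | lra]. }
  destruct Ht as [Ht0 Ht1]. split.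
  - assert (vsub a' a = (0,0)) as Ha.
    { apply vnorm_le_eps_eq0. intros e He. destruct (K (e / 2)) as [d [Hd G]]; [lra|].
      set (dd := Rmin (d / 2) (1 / 2)). assert (Hdd : 0 < dd) by (apply Rmin_pos; lra).
      assert (dd <= d / 2) by apply Rmin_l. assert (dd <= 1 / 2) by apply Rmin_r.
      set (sg := if Rle_dec t (1/2) then 1 else -1).
      assert (Hsg : I01 (t + sg * dd) /\ Rabs sg = 1).
      { unfold sg, I01; destruct Rle_dec; rewrite ?Rabs_R1, ?Rabs_m1; split; lra. }
      destruct Hsg as [Hin Hsg].
      specialize (G (t + sg * dd) s Hin).
      replace (t + sg * dd - t) with (sg * dd) in G by ring. rewrite Rminus_diag, Rabs_R0 in G.
      rewrite Rabs_mult, Hsg, Rabs_right in G by lra. specialize (G ltac:(lra) ltac:(lra)).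
      replace (vadd (vscal (sg * dd) (vsub a' a)) (vscal 0 (vsub b' b))) with (vscal (sg * dd) (vsub a' a)) in G by veq.
      rewrite vnorm_scal, Rabs_mult, Hsg, (Rabs_right dd) in G by lra.
      apply Rmult_le_reg_l with dd; auto. nra. }
    destruct a, a'; unfold vsub in Ha; simpl in Ha; inversion Ha. f_equal; lra.
  - assert (vsub b' b = (0,0)) as Hb.
    { apply vnorm_le_eps_eq0. intros e He. destruct (K (e / 2)) as [d [Hd G]]; [lra|].
      specialize (G t (s + d / 2) (conj Ht0 Ht1)).
      rewrite Rminus_diag, Rabs_R0 in G. replace (s + d / 2 - s) with (d / 2) in G by ring.
      rewrite (Rabs_right (d/2)) in G by lra. specialize (G ltac:(lra) ltac:(lra)).
      replace (vadd (vscal 0 (vsub a' a)) (vscal (d / 2) (vsub b' b))) with (vscal (d / 2) (vsub b' b)) in G by veq.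
      rewrite vnorm_scal, Rabs_right in G by lra.
      apply Rmult_le_reg_l with (d / 2); [lra | nra]. }
    destruct b, b'; unfold vsub in Hb; simpl in Hb; inversion Hb. f_equal; lra.
Qed.

Lemma C1_cyl_derivs_periodic H Dt Ds : C1_cyl_with H Dt Ds -> forall t s, I01 t ->
  Dt t (s + 1) = Dt t s /\ Ds t (s + 1) = Ds t s.
Proof.
  intros [P [F _]] t s Ht.
  apply (C1_cyl_deriv_unique H t s); auto.
  intros e He. destruct (F t (s + 1) Ht e He) as [d [Hd G]]. exists d; split; auto.
  intros t' s' Ht' T S. specialize (G t' (s' + 1) Ht' T).
  replace (s' + 1 - (s + 1)) with (s' - s) in G by ring. rewrite !P in G; auto.
Qed.

Lemma C1_cyl_bounded H Dt Ds : C1_cyl_with H Dt Ds -> exists M, forall t s, I01 t ->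
  vnorm (H t s) <= M /\ vnorm (Dt t s) <= M /\ vnorm (Ds t s) <= M.
Proof.
  intros HC. pose proof HC as [HP [HF HD]].
  destruct (box_uniform_bound 0 1 0 1
              (fun t s M => vnorm (H t s) <= M /\ vnorm (Dt t s) <= M /\ vnorm (Ds t s) <= M)) as [M HM].
  { intros x y M M' HMM [A [B C]]. repeat split; lra. }
  { intros u v [Hu Hv]. destruct (HD u v Hu 1 ltac:(lra)) as [d1 [Hd1 G1]].
    destruct (HF u v Hu 1 ltac:(lra)) as [d2 [Hd2 G2]].
    exists (Rmin 1 (Rmin d1 d2)). split; [repeat apply Rmin_pos; lra|].
    exists (vnorm (H u v) + vnorm (Dt u v) + vnorm (Ds u v) + 3).
    intros x y [Hx Hy] Hxu Hyv.
    pose proof (Rmin_l 1 (Rmin d1 d2)). pose proof (Rmin_r 1 (Rmin d1 d2)).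
    pose proof (Rmin_l d1 d2). pose proof (Rmin_r d1 d2).
    destruct (G1 x y Hx ltac:(lra) ltac:(lra)) as [A B].
    specialize (G2 x y Hx ltac:(lra) ltac:(lra)).
    pose proof (vnorm_ge0 (H u v)). pose proof (vnorm_ge0 (Dt u v)). pose proof (vnorm_ge0 (Ds u v)).
    pose proof (vnorm_le_add_sub (Dt x y) (Dt u v)). pose proof (vnorm_le_add_sub (Ds x y) (Ds u v)).
    set (L := vadd (vscal (x - u) (Dt u v)) (vscal (y - v) (Ds u v))) in G2.
    assert (vnorm L <= vnorm (Dt u v) + vnorm (Ds u v)).
    { unfold L. eapply Rle_trans; [apply vnorm_triangle|]. rewrite !vnorm_scal.
      pose proof (Rabs_pos (x - u)). pose proof (Rabs_pos (y - v)). nra. }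
    pose proof (vnorm_le_add_sub (H x y) (H u v)).
    pose proof (vnorm_le_add_sub (vsub (H x y) (H u v)) L).
    pose proof (Rabs_pos (x - u)). pose proof (Rabs_pos (y - v)).
    repeat split; lra. }
  exists M. intros t s Ht.
  assert (Per : forall s', (H t (s' + 1), Dt t (s' + 1), Ds t (s' + 1)) = (H t s', Dt t s', Ds t s')).
  { intros s'. destruct (C1_cyl_derivs_periodic _ _ _ HC t s' Ht) as [-> ->]. rewrite HP; auto. }
  destruct (periodic_reduce _ (fun s => (H t s, Dt t s, Ds t s)) Per s) as [a [Ha [E _]]].
  inversion E as [[E1 E2 E3]]. rewrite E1, E2, E3. apply HM. split; auto; lra.
Qed.

(** * The interpolated homotopy *)

Definition weight (N : nat) (x : R) (j : nat) : R := bump (INR N * x - INR j).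
Definition dweight (N : nat) (x : R) (j : nat) : R := dbump (INR N * x - INR j) * INR N.

Lemma weight_bounds N x j : 0 <= weight N x j <= 1.
Proof. apply bump_range. Qed.

Lemma sum_weight N x : (0 < N)%nat -> I01 x -> sum_f_R0 (weight N x) N = 1.
Proof. intros HN Hx. apply sum_bump_eq1. apply lt_0_INR in HN. destruct Hx; split; nra. Qed.

Lemma weight_pos_near N x j : (0 < N)%nat -> 0 < weight N x j -> Rabs (INR j / INR N - x) < 1 / INR N.
Proof.
  intros HN H. apply Rabs_lt1_of_bump_pos in H. apply lt_0_INR in HN.
  replace (INR j / INR N - x) with (- (INR N * x - INR j) * / INR N) by (field; lra).
  rewrite Rabs_mult, Rabs_Ropp, (Rabs_right (/ INR N)) by (apply Rle_ge, Rlt_le, Rinv_0_lt_compat; lra).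
  unfold Rdiv. rewrite Rmult_1_l. pose proof (Rinv_0_lt_compat _ HN). nra.
Qed.

Lemma weight_lipschitz N z z0 i : Rabs (weight N z i - weight N z0 i) <= 2 * INR N * Rabs (z - z0).
Proof.
  unfold weight. eapply Rle_trans; [apply bump_lipschitz|].
  replace (INR N * z - INR i - (INR N * z0 - INR i)) with (INR N * (z - z0)) by ring.
  rewrite Rabs_mult, (Rabs_right (INR N)) by (apply Rle_ge, pos_INR). lra.
Qed.

Lemma derivable_pt_lim_affine c d x : derivable_pt_lim (fun y => c * y - d) x c.
Proof.
  pose proof (derivable_pt_lim_minus (fun y => c * y) (fun _ => d) x c 0
                (derivable_pt_lim_linear c x) (derivable_pt_lim_const d x)) as H.
  rewrite Rminus_0_r in H. exact H.
Qed.

Lemma weight_deriv N j t : derivable_pt_lim (fun x => weight N x j) t (dweight N t j).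
Proof.
  unfold weight, dweight. apply (derivable_pt_lim_comp (fun x => INR N * x - INR j) bump); [|apply bump_deriv].
  apply derivable_pt_lim_affine.
Qed.

Lemma dweight_cont N j t : continuity_pt (fun x => dweight N x j) t.
Proof.
  unfold dweight. apply (continuity_pt_mult (fun x => dbump (INR N * x - INR j)) (fun _ => INR N));
    [|apply continuity_pt_const; intros ? ?; auto].
  apply (continuity_pt_comp (fun x => INR N * x - INR j) dbump); [|apply dbump_cont].
  apply derivable_continuous_pt. exists (INR N). apply derivable_pt_lim_affine.
Qed.

Lemma grid_I01 N j : (0 < N)%nat -> (j <= N)%nat -> I01 (INR j / INR N).
Proof.
  intros HN Hj. apply lt_0_INR in HN. apply le_INR in Hj. pose proof (pos_INR j). split.
  - apply Rmult_le_pos; [lra | left; apply Rinv_0_lt_compat; lra].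
  - apply Rmult_le_reg_r with (INR N); [lra|]. unfold Rdiv. rewrite Rmult_assoc, Rinv_l by lra. lra.
Qed.

Lemma exists_inv_INR_lt rho : 0 < rho -> exists N, (0 < N)%nat /\ 1 / INR N < rho.
Proof.
  intros H. destruct (archimed (/ rho)) as [H1 _].
  exists (S (Z.abs_nat (up (/ rho)))). split; [lia|].
  assert (HN : / rho < INR (S (Z.abs_nat (up (/ rho))))).
  { rewrite S_INR, INR_IZR_INZ, Zabs2Nat.id_abs, abs_IZR. pose proof (Rle_abs (IZR (up (/ rho)))). lra. }
  pose proof (Rinv_0_lt_compat rho H). set (m := INR _) in *.
  unfold Rdiv. rewrite Rmult_1_l, <- (Rinv_inv rho). apply Rinv_lt_contravar; [nra | auto].
Qed.

Definition grid (ht : R -> R -> curve) N i j : curve := ht (INR i / INR N) (INR j / INR N).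

(* Row [0] is [gam] itself, so that the homotopy starts exactly at [gam];
   row [i > 0] interpolates [t |-> ht (i/N) t] between grid points. *)
Definition row N (gam : R -> curve) ht (i : nat) (t : R) : curve :=
  match i with O => gam t | S _ => curve_comb N (weight N t) (grid ht N i) end.
Definition row_Dt N (Dtg : R -> curve) ht (i : nat) (t : R) : curve :=
  match i with O => Dtg t | S _ => curve_comb N (dweight N t) (grid ht N i) end.
Definition row_Ds N (Dsg : R -> curve) ht (i : nat) (t : R) : curve :=
  match i with O => Dsg t | S _ => curve_comb N (weight N t) (fun j => dcurve (grid ht N i j)) end.

Definition homotopy N gam ht z t : curve := curve_comb N (weight N z) (fun i => row N gam ht i t).
Definition homotopy_Dt N Dtg ht z t : curve := curve_comb N (weight N z) (fun i => row_Dt N Dtg ht i t).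
Definition homotopy_Ds N Dsg ht z t : curve := curve_comb N (weight N z) (fun i => row_Ds N Dsg ht i t).

Section Interpolation.
Variable n : Z.
Variables (gam Dtg Dsg : R -> curve) (ht : R -> R -> curve).
Hypothesis gam_C1 : C1_cyl_with gam Dtg Dsg.
Hypothesis ht_in_I : forall z t, I01 z -> I01 t -> in_I n (ht z t).
Hypothesis ht_0 : forall t, I01 t -> ht 0 t = gam t.
Variable N : nat.
Hypothesis N_pos : (0 < N)%nat.

Let grid_C1 i j : (i <= N)%nat -> (j <= N)%nat -> C1_curve_with (grid ht N i j) (dcurve (grid ht N i j)).
Proof. intros Hi Hj. apply (in_I_dcurve n), ht_in_I; apply grid_I01; auto. Qed.

Lemma row_C1_cyl i : (i <= N)%nat -> C1_cyl_with (row N gam ht i) (row_Dt N Dtg ht i) (row_Ds N Dsg ht i).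
Proof.
  intros Hi. destruct i as [|i']; [exact gam_C1|].
  apply (C1_cyl_with_vsum N (fun j t s => vscal (weight N t j) (grid ht N (S i') j s))
                            (fun j t s => vscal (dweight N t j) (grid ht N (S i') j s))
                            (fun j t s => vscal (weight N t j) (dcurve (grid ht N (S i') j) s))).
  intros j Hj. apply (C1_cyl_with_product (fun t => weight N t j) (fun t => dweight N t j)).
  - intros t; apply weight_deriv.
  - intros t; apply dweight_cont.
  - apply grid_C1; auto.
Qed.

Lemma homotopy_C1_cyl z : C1_cyl_with (homotopy N gam ht z) (homotopy_Dt N Dtg ht z) (homotopy_Ds N Dsg ht z).
Proof.
  apply (C1_cyl_with_vsum N (fun i t s => vscal (weight N z i) (row N gam ht i t s))
                            (fun i t s => vscal (weight N z i) (row_Dt N Dtg ht i t s))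
                            (fun i t s => vscal (weight N z i) (row_Ds N Dsg ht i t s))).
  intros i Hi. apply C1_cyl_with_scal, row_C1_cyl; auto.
Qed.

Lemma homotopy_at_0 t : homotopy N gam ht 0 t = gam t.
Proof.
  apply functional_extensionality; intros s. unfold homotopy, curve_comb.
  apply (vsum_delta0 N (weight N 0) (fun i => row N gam ht i t s)).
  - unfold weight. rewrite Rmult_0_r, Rminus_0_r, bump_0; auto.
  - intros i Hi. unfold weight. apply bump_out. rewrite Rmult_0_r, Rminus_0_l, Rabs_Ropp.
    pose proof (le_INR 1 i Hi). simpl in H. rewrite Rabs_right; lra.
Qed.

(* [homotopy z t] is a convex combination of the [ht z' t'] with [|z' - z|, |t' - t| < 1/N]. *)
Lemma homotopy_C1_near z t g e : I01 z -> I01 t ->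
  (forall z' t', I01 z' -> I01 t' -> Rabs (z' - z) < 1 / INR N -> Rabs (t' - t) < 1 / INR N ->
     C1_near g e (ht z' t')) ->
  C1_near g e (homotopy N gam ht z t).
Proof.
  intros Hz Ht Hnear.
  assert (Z0 : I01 0) by (split; lra).
  assert (Hr : 0 < 1 / INR N) by (apply Rdiv_lt_0_compat; [lra | apply lt_0_INR; auto]).
  apply C1_near_comb; [intros; apply weight_bounds | apply sum_weight; auto | |].
  - intros [|i'] Hi; simpl.
    + rewrite <- ht_0 by auto. apply (in_I_dcurve n), ht_in_I; auto.
    + apply (C1_curve_dcurve _ (curve_comb N (weight N t) (fun j => dcurve (grid ht N (S i') j)))).
      apply C1_curve_comb. intros j Hj; apply grid_C1; auto.
  - intros [|i'] Hi Hw; pose proof (weight_pos_near N z _ N_pos Hw) as Hzi; simpl.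
    + rewrite <- ht_0 by auto. apply Hnear; auto; [| rewrite Rminus_diag, Rabs_R0; auto].
      change (INR 0) with 0 in Hzi. unfold Rdiv in *. rewrite Rmult_0_l in Hzi. exact Hzi.
    + apply C1_near_comb; [intros; apply weight_bounds | apply sum_weight; auto | |].
      * intros j Hj. apply grid_C1; auto.
      * intros j Hj Hwj. pose proof (weight_pos_near N t j N_pos Hwj). unfold grid.
        apply Hnear; try apply grid_I01; auto.
Qed.

Lemma row_bounded Mg Mh : 0 <= Mh ->
  (forall t s, I01 t -> vnorm (gam t s) <= Mg /\ vnorm (Dtg t s) <= Mg /\ vnorm (Dsg t s) <= Mg) ->
  (forall z t s, I01 z -> I01 t -> vnorm (ht z t s) <= Mh /\ vnorm (dcurve (ht z t) s) <= Mh) ->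
  forall i t s, (i <= N)%nat -> I01 t ->
   let M := Rmax Mg (INR (S N) * ((2 * INR N + 1) * Mh)) in
   vnorm (row N gam ht i t s) <= M /\ vnorm (row_Dt N Dtg ht i t s) <= M /\ vnorm (row_Ds N Dsg ht i t s) <= M.
Proof.
  intros HMh Hg Hh i t s Hi Ht M. unfold M.
  destruct i as [|i'].
  - destruct (Hg t s Ht) as [A [B C]]. pose proof (Rmax_l Mg (INR (S N) * ((2 * INR N + 1) * Mh))).
    repeat split; cbn [row row_Dt row_Ds]; lra.
  - pose proof (Rmax_r Mg (INR (S N) * ((2 * INR N + 1) * Mh))).
    pose proof (pos_INR N).
    assert (Hgr : forall j, (j <= N)%nat ->
              vnorm (grid ht N (S i') j s) <= Mh /\ vnorm (dcurve (grid ht N (S i') j) s) <= Mh).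
    { intros j Hj. apply Hh; apply grid_I01; auto. }
    assert (Hw : forall j, (j <= N)%nat -> Rabs (weight N t j) <= 2 * INR N + 1).
    { intros j _. pose proof (weight_bounds N t j). rewrite Rabs_right; lra. }
    assert (Hdw : forall j, (j <= N)%nat -> Rabs (dweight N t j) <= 2 * INR N + 1).
    { intros j _. unfold dweight. rewrite Rabs_mult, (Rabs_right (INR N)) by lra.
      pose proof (dbump_bound (INR N * t - INR j)). pose proof (Rabs_pos (dbump (INR N * t - INR j))). nra. }
    cbn [row row_Dt row_Ds]. unfold curve_comb. repeat split; (eapply Rle_trans; [apply vnorm_vsum_scal_le|exact H]);
      auto; intros j Hj; apply Hgr; auto.
Qed.

Lemma homotopy_z_cont M :
  (forall i t s, (i <= N)%nat -> I01 t ->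
   vnorm (row N gam ht i t s) <= M /\ vnorm (row_Dt N Dtg ht i t s) <= M /\ vnorm (row_Ds N Dsg ht i t s) <= M) ->
  forall z0 eps, 0 < eps -> exists delta, 0 < delta /\
    forall z, Rabs (z - z0) < delta -> forall t s, I01 t ->
      vnorm (vsub (homotopy N gam ht z t s) (homotopy N gam ht z0 t s)) <= eps /\
      vnorm (vsub (homotopy_Dt N Dtg ht z t s) (homotopy_Dt N Dtg ht z0 t s)) <= eps /\
      vnorm (vsub (homotopy_Ds N Dsg ht z t s) (homotopy_Ds N Dsg ht z0 t s)) <= eps.
Proof.
  intros HB z0 eps He.
  assert (HM : 0 <= M) by (destruct (HB 0%nat 0 0) as [B _]; [lia | split; lra | pose proof (vnorm_ge0 (row N gam ht 0 0 0)); lra]).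
  assert (HA : 0 <= INR (S N) * (2 * INR N) * M)
    by (pose proof (pos_INR (S N)); pose proof (pos_INR N); repeat apply Rmult_le_pos; lra).
  set (K := INR (S N) * (2 * INR N) * M + 1).
  assert (HK : 0 < K) by (unfold K; lra).
  exists (eps / K). split; [apply Rdiv_lt_0_compat; lra|].
  intros z Hz t s Ht.
  assert (Hsum : sum_f_R0 (fun i => Rabs (weight N z i - weight N z0 i)) N <= INR (S N) * (2 * INR N * Rabs (z - z0))).
  { rewrite Rmult_comm, <- sum_cte. apply sum_Rle. intros; apply weight_lipschitz. }
  assert (Q : sum_f_R0 (fun i => Rabs (weight N z i - weight N z0 i)) N * M <= eps).
  { apply Rle_trans with ((INR (S N) * (2 * INR N) * M) * Rabs (z - z0)).
    - replace ((INR (S N) * (2 * INR N) * M) * Rabs (z - z0)) with (INR (S N) * (2 * INR N * Rabs (z - z0)) * M) by ring.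
      apply Rmult_le_compat_r; auto.
    - apply Rle_trans with (K * (eps / K)); [|right; field; lra].
      apply Rmult_le_compat; auto using Rabs_pos; [unfold K | ]; lra. }
  unfold homotopy, homotopy_Dt, homotopy_Ds, curve_comb.
  repeat split; (eapply Rle_trans; [apply vnorm_vsum_wdiff_le | exact Q]); intros i Hi; apply HB; auto.
Qed.
End Interpolation.

Lemma square_map_C1_bounded n ht : square_map_in_I n ht -> exists M, 0 <= M /\
  forall z t s, I01 z -> I01 t -> vnorm (ht z t s) <= M /\ vnorm (dcurve (ht z t) s) <= M.
Proof.
  intros [HI Hcont].
  destruct (box_uniform_bound 0 1 0 1
              (fun z t M => forall s, vnorm (ht z t s) <= M /\ vnorm (dcurve (ht z t) s) <= M)) as [M HM].
  { intros x y M M' HMM H s. destruct (H s); split; lra. }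
  { intros u v [Hu Hv]. destruct (Hcont u v Hu Hv 1 ltac:(lra)) as [r [Hr G]]. exists r; split; auto.
    destruct (in_I_dcurve n (ht u v) (HI u v Hu Hv)) as [[P [D C]] _].
    destruct (periodic_curve_bounded (ht u v) P (curve_deriv_vcont _ _ D)) as [M1 HM1].
    destruct (periodic_curve_bounded (dcurve (ht u v)) (curve_deriv_periodic _ _ P D) C) as [M2 HM2].
    exists (Rmax M1 M2 + 1). intros x y [Hx Hy] Hxu Hyv s.
    destruct (C1_near_bound _ _ _ s (C1_near_of_close n _ _ _ (HI x y Hx Hy) (HI u v Hu Hv) (G x y Hx Hy Hxu Hyv))).
    pose proof (HM1 s); pose proof (HM2 s); pose proof (Rmax_l M1 M2); pose proof (Rmax_r M1 M2). split; lra. }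
  exists (Rabs M). split; [apply Rabs_pos|]. intros z t s Hz Ht.
  destruct (HM z t (conj Hz Ht) s). pose proof (Rle_abs M). split; lra.
Qed.

Lemma homotopy_C1_path n gam Dtg Dsg ht N :
  C1_cyl_with gam Dtg Dsg -> square_map_in_I n ht -> (0 < N)%nat ->
  exists Dt Ds : R -> R -> curve,
    (forall z, I01 z -> C1_cyl_with (homotopy N gam ht z) (Dt z) (Ds z)) /\
    (forall z0, I01 z0 -> forall eps, 0 < eps -> exists delta, 0 < delta /\
       forall z, I01 z -> Rabs (z - z0) < delta -> forall t s, I01 t ->
         vnorm (vsub (homotopy N gam ht z t s) (homotopy N gam ht z0 t s)) <= eps /\
         vnorm (vsub (Dt z t s) (Dt z0 t s)) <= eps /\
         vnorm (vsub (Ds z t s) (Ds z0 t s)) <= eps).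
Proof.
  intros Hgam Hsq HN. pose proof Hsq as [HI _].
  destruct (C1_cyl_bounded _ _ _ Hgam) as [Mg HMg].
  destruct (square_map_C1_bounded n ht Hsq) as [Mh [HMh0 HMh]].
  exists (homotopy_Dt N Dtg ht), (homotopy_Ds N Dsg ht). split.
  - intros z _. apply (homotopy_C1_cyl n); auto.
  - intros z0 _ eps He.
    destruct (homotopy_z_cont gam Dtg Dsg ht N HN _ (row_bounded gam Dtg Dsg ht N HN Mg Mh HMh0 HMg HMh) z0 eps He)
      as [delta [Hd H]].
    exists delta. split; auto.
Qed.

(* A Lebesgue number for the cover of [box] by the sets on which [ht] stays in a
   neighbourhood of [ht u v] where [P] holds. *)
Lemma homotopy_C1_open_prop n gam ht (P : curve -> Prop) a b a' b' :
  square_map_in_I n ht -> (forall t, I01 t -> ht 0 t = gam t) ->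
  0 <= a -> b <= 1 -> 0 <= a' -> b' <= 1 ->
  (forall u v, box a b a' b' u v -> C1_open_at P (ht u v)) ->
  exists rho, 0 < rho /\ forall N, (0 < N)%nat -> 1 / INR N < rho ->
    forall z t, box a b a' b' z t -> P (homotopy N gam ht z t).
Proof.
  intros [HI Hcont] H0 Ha Hb Ha' Hb' Hopen.
  destruct (box_lebesgue_number a b a' b' (fun u v r => exists e, (forall f, C1_near (ht u v) e f -> P f) /\
              forall z' t', I01 z' -> I01 t' -> Rabs (z' - u) < r -> Rabs (t' - v) < r ->
                C1_near (ht u v) e (ht z' t'))) as [rho [Hrho HL]].
  { intros u v Huv. assert (Hu : I01 u) by (destruct Huv; split; lra).
    assert (Hv : I01 v) by (destruct Huv; split; lra).
    destruct (Hopen u v Huv) as [e [He HP]]. destruct (Hcont u v Hu Hv e He) as [d [Hd G]].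
    exists d; split; auto. exists e; split; auto.
    intros z' t' Hz' Ht' Hzu Htv. apply (C1_near_of_close n); auto. }
  exists rho. split; auto. intros N HN HNr z t Hzt.
  destruct (HL z t Hzt) as [u [v [r [[e [HP Hnear]] [Hzu [Htv Hr]]]]]].
  apply HP, (homotopy_C1_near n gam ht); auto; try (destruct Hzt; split; lra).
  intros z' t' Hz' Ht' Hzz Htt. apply Hnear; auto.
  - replace (z' - u) with ((z' - z) + (z - u)) by ring. pose proof (Rabs_triang (z' - z) (z - u)). lra.
  - replace (t' - v) with ((t' - t) + (t - v)) by ring. pose proof (Rabs_triang (t' - t) (t - v)). lra.
Qed.

Theorem mainTheorem4 (n : Z) (gam : R -> curve) (ht : R -> R -> curve)
  (Hgam : path_in_I n gam)
  (Hht : square_map_in_I n ht)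
  (Hht0 : forall t, I01 t -> ht 0 t = gam t)
  (Hi : C1_cyl gam)
  (Hii : forall t, I01 t -> is_embedding (ht 1 t))
  (Hiii : forall z, I01 z -> is_embedding (ht z 0) /\ is_embedding (ht z 1)) :
  exists h : R -> R -> curve,
    (forall z t, I01 z -> I01 t -> in_I n (h z t)) /\
    (forall t, I01 t -> h 0 t = gam t) /\
    (exists Dt Ds : R -> R -> curve,
       (forall z, I01 z -> C1_cyl_with (h z) (Dt z) (Ds z)) /\
       (forall z0, I01 z0 -> forall eps, 0 < eps -> exists delta, 0 < delta /\
          forall z, I01 z -> Rabs (z - z0) < delta ->
            forall t s, I01 t ->
              vnorm (vsub (h z t s) (h z0 t s)) <= eps /\
              vnorm (vsub (Dt z t s) (Dt z0 t s)) <= eps /\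
              vnorm (vsub (Ds z t s) (Ds z0 t s)) <= eps)) /\
    (forall t, I01 t -> is_embedding (h 1 t)) /\
    (forall z, I01 z -> is_embedding (h z 0) /\ is_embedding (h z 1)).
Proof.
  (* [Hgam] is implied by [Hht] and [Hht0]. *)
  destruct Hi as [Dtg [Dsg Hgam_C1]]. pose proof Hht as [HI _].
  assert (Hemb : forall z t, I01 z -> I01 t -> is_embedding (ht z t) -> C1_open_at is_embedding (ht z t))
    by (intros z t Hz Ht; apply (embedding_C1_open n), HI; auto).
  destruct (homotopy_C1_open_prop n gam ht (in_I n) 0 1 0 1) as [rho1 [Hr1 H1]]; auto; try lra.
  { intros u v [Hu Hv]. apply in_I_C1_open, HI; split; lra. }
  destruct (homotopy_C1_open_prop n gam ht is_embedding 1 1 0 1) as [rho2 [Hr2 H2]]; auto; try lra.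
  { intros u v [Hu Hv]. replace u with 1 by lra. apply Hemb, Hii; split; lra. }
  destruct (homotopy_C1_open_prop n gam ht is_embedding 0 1 0 0) as [rho3 [Hr3 H3]]; auto; try lra.
  { intros u v [Hu Hv]. replace v with 0 by lra. apply Hemb, Hiii; split; lra. }
  destruct (homotopy_C1_open_prop n gam ht is_embedding 0 1 1 1) as [rho4 [Hr4 H4]]; auto; try lra.
  { intros u v [Hu Hv]. replace v with 1 by lra. apply Hemb, Hiii; split; lra. }
  assert (Hrho : 0 < Rmin (Rmin rho1 rho2) (Rmin rho3 rho4)) by (repeat apply Rmin_pos; auto).
  destruct (exists_inv_INR_lt _ Hrho) as [N [HN HNr]].
  pose proof (Rmin_l (Rmin rho1 rho2) (Rmin rho3 rho4)). pose proof (Rmin_r (Rmin rho1 rho2) (Rmin rho3 rho4)).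
  pose proof (Rmin_l rho1 rho2). pose proof (Rmin_r rho1 rho2). pose proof (Rmin_l rho3 rho4). pose proof (Rmin_r rho3 rho4).
  exists (homotopy N gam ht). split; [|split; [|split; [|split]]].
  - intros z t Hz Ht. apply (H1 N); auto; [lra | split; auto].
  - intros t _. apply homotopy_at_0.
  - apply (homotopy_C1_path n gam Dtg Dsg); auto.
  - intros t Ht. apply (H2 N); auto; [lra | split; [split |]; auto; lra].
  - intros z Hz. split; [apply (H3 N) | apply (H4 N)]; auto; try lra; split; auto; lra.
Qed.
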